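(* Let $\mathcal{L}_{9}\subset\mathbb{P}^2_{\mathbb{C}}$ be the line arrangement defined by $$y(y-z)(y+z)(y-x)(y+x)(y-x-2z)(y-x+2z)(y+x-2z)(y+x+2z)=0,$$ and let $\mathcal{L}_{9}'\subset\mathbb{P}^2_{\mathbb{C}}$ be the line arrangement defined by $$xyz(x+y)(x+z)(y-z)(x+y+ez)(x-ey+z)(x-ey+ez)=0,$$ where $e\in\mathbb{C}$ satisfies $e^{2}+1=0$. Then $\mathcal{L}_{9}$ and $\mathcal{L}_{9}'$ form a weak Ziegler pair.
   Context: For a reduced curve $C: f=0$ in $\mathbb{P}^2_{\mathbb{C}}$, ${\rm mdr}(f)$ is the minimal degree $r$ of a nonzero triple $(a,b,c)$ of homogeneous polynomials of degree $r$ in $\mathbb{C}[x,y,z]$ with $a\,\partial_x f+b\,\partial_y f+c\,\partial_z f=0$. For a line arrangement, $n_i$ is the number of points where exactly $i$ lines meet, and the weak-combinatorics is $(d;n_2,\dots,n_m)$ with $d$ the number of lines and $m$ the maximal multiplicity. Two reduced plane curves $C_1,C_2$ with all irreducible components smooth form a weak Ziegler pair if they have the same weak-combinatorics but ${\rm mdr}(C_1)\neq{\rm mdr}(C_2)$. *)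

From HB Require Import structures.
From mathcomp Require Import all_boot all_order all_algebra all_field.
From mathcomp Require Import mpoly.
Set Implicit Arguments. Unset Strict Implicit. Unset Printing Implicit Defensive.
Import GRing.Theory Num.Theory.
Local Open Scope ring_scope.

(* Ground field: algC (algebraically closed, char 0), a model of C. *)
(* A line  a x + b y + c z = 0  of P^2 is given by its coefficient triple (a,b,c);
   a point of P^2 is represented by a nonzero triple of homogeneous coordinates. *)
Definition vec3 := (algC * algC * algC)%type.

Definition dot3 (l v : vec3) : algC :=
  l.1.1 * v.1.1 + l.1.2 * v.1.2 + l.2 * v.2.

Definition nonzero3 (v : vec3) : Prop := v <> (0, 0, 0).

Definition proportional3 (v w : vec3) : Prop :=
  exists k : algC, k != 0 /\ v = (k * w.1.1, k * w.1.2, k * w.2).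

Definition arrangement := seq vec3.

Definition reduced_arr (L : arrangement) : Prop :=
  (forall i, (i < size L)%N -> nonzero3 (nth (0,0,0) L i)) /\
  (forall i j, (i < size L)%N -> (j < size L)%N -> i <> j ->
     ~ proportional3 (nth (0,0,0) L i) (nth (0,0,0) L j)).

Definition mult_at (L : arrangement) (v : vec3) : nat :=
  count (fun l => dot3 l v == 0) L.

(* "the set of points of P^2 satisfying P has exactly n elements":
   a list of n pairwise non-proportional nonzero representatives of points
   satisfying P, such that every point satisfying P is represented. *)
Definition card_P2 (P : vec3 -> Prop) (n : nat) : Prop :=
  exists s : seq vec3,
    [/\ size s = n,
        forall i, (i < n)%N -> nonzero3 (nth (0,0,0) s i) /\ P (nth (0,0,0) s i),
        forall i j, (i < n)%N -> (j < n)%N -> i <> j ->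
          ~ proportional3 (nth (0,0,0) s i) (nth (0,0,0) s j)
      & forall v, nonzero3 v -> P v -> exists2 i, (i < n)%N & proportional3 v (nth (0,0,0) s i)].

Definition n_pts (L : arrangement) (i n : nat) : Prop :=
  card_P2 (fun v => mult_at L v = i) n.

(* equal weak combinatorics (d; n_2, ..., n_m): same number of lines and the
   same n_i for every i >= 2 (n_i = 0 for i > m). *)
Definition same_weak_comb (L1 L2 : arrangement) : Prop :=
  size L1 = size L2 /\
  forall i, (2 <= i)%N -> forall n, n_pts L1 i n <-> n_pts L2 i n.

Definition lin_form (l : vec3) : {mpoly algC[3]} :=
  l.1.1 *: 'X_(0 : 'I_3) + l.1.2 *: 'X_(1 : 'I_3) + l.2 *: 'X_(2 : 'I_3).

Definition arr_poly (L : arrangement) : {mpoly algC[3]} :=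
  \prod_(l <- L) lin_form l.

Definition jac_syzygy (f : {mpoly algC[3]}) (r : nat) : Prop :=
  exists a b c : {mpoly algC[3]},
    [/\ a \is r.-homog, b \is r.-homog, c \is r.-homog,
        ~ (a = 0 /\ b = 0 /\ c = 0)
      & a * mderiv (0 : 'I_3) f + b * mderiv (1 : 'I_3) f + c * mderiv (2 : 'I_3) f = 0].

Definition is_mdr (f : {mpoly algC[3]}) (r : nat) : Prop :=
  jac_syzygy f r /\ forall r', (r' < r)%N -> ~ jac_syzygy f r'.

(* weak Ziegler pair of line arrangements (lines are smooth components) *)
Definition weak_Ziegler_pair (L1 L2 : arrangement) : Prop :=
  [/\ reduced_arr L1, reduced_arr L2, same_weak_comb L1 L2 &
      exists r1 r2, [/\ is_mdr (arr_poly L1) r1, is_mdr (arr_poly L2) r2 & r1 <> r2]].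

Definition L9 : arrangement :=
  [:: (0, 1, 0); (0, 1, -1); (0, 1, 1); (-1, 1, 0); (1, 1, 0);
      (-1, 1, -2); (-1, 1, 2); (1, 1, -2); (1, 1, 2)].

Definition L9' (e : algC) : arrangement :=
  [:: (1, 0, 0); (0, 1, 0); (0, 0, 1); (1, 1, 0); (1, 0, 1); (0, 1, -1);
      (1, 1, e); (1, -e, 1); (1, -e, e)].

From mathcomp Require Import all_boot all_order all_algebra all_field.
From mathcomp Require Import mpoly.
From Stdlib Require Import ZArith.
From mathcomp Require Import ring zify ssrZ.
Import ssrZ.Instances.
Set Implicit Arguments. Unset Strict Implicit. Unset Printing Implicit Defensive.
Import GRing.Theory.
Local Open Scope ring_scope.

(* All lines of both arrangements have coefficients in Z[i], i standing for the
   root e of X^2 + 1, so every object involved is represented exactly by Gaussian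
   integers and every check is a computation.

   Weak combinatorics: each pair of distinct lines meets at one point of an explicit
   list, so for k >= 2 the points of multiplicity k are exactly the listed points of
   multiplicity k, and the multiplicities of the two lists are permutations of
   each other.

   mdr: an explicit Jacobian syzygy of degree 4 for L9 and of degree 5 for L9'
   (syzygies can be shifted to any higher degree), and none of degree 3, resp. 4.
   A syzygy of degree r is a linear relation among the polynomials m * df/dx_i,
   m a monomial of degree r; there is none because some linear functionals on
   their coefficients have a diagonal pairing matrix with them, with nonzero
   diagonal. *)

Definition zr (z : Z) : algC := (int_of_Z z)%:~R.

Lemma zrD x y : zr (x + y)%Z = zr x + zr y.
Proof. by rewrite /zr -intrD -(rmorphD int_of_Z). Qed.
Lemma zrM x y : zr (x * y)%Z = zr x * zr y.
Proof. by rewrite /zr -intrM -(rmorphM int_of_Z). Qed.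
Lemma zrN x : zr (- x)%Z = - zr x.
Proof. by rewrite /zr -intrN -(rmorphN int_of_Z). Qed.
Lemma zr_nat n : zr (Z.of_nat n) = n%:R.
Proof. by rewrite /zr -[Z.of_nat n]/(Z_of_int n) Z_of_intK. Qed.
Lemma zr_eq0 x : (zr x == 0) = (x =? 0)%Z.
Proof.
rewrite /zr intr_eq0; apply/eqP/Z.eqb_spec => [h|-> //].
by rewrite -[x]int_of_ZK h.
Qed.

Definition mono := (nat * nat * nat)%type.
Definition mono_exp (m : mono) (i : nat) : nat := nth 0%nat [:: m.1.1; m.1.2; m.2] i.
Definition mono_deg (m : mono) : nat := (m.1.1 + m.1.2 + m.2)%nat.
Definition mono_add (m m' : mono) : mono := (m.1.1 + m'.1.1, m.1.2 + m'.1.2, m.2 + m'.2)%nat.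
Definition mono_dec (i : nat) (m : mono) : mono :=
  (m.1.1 - (i == 0%nat), m.1.2 - (i == 1%nat), m.2 - (i == 2%nat))%nat.

Definition mnm_of (m : mono) : 'X_{1..3} := [multinom mono_exp m i | i < 3].

Lemma mnm_ofE m i : mnm_of m i = mono_exp m i.
Proof. by rewrite mnmE. Qed.

Lemma ord3P (P : 'I_3 -> Prop) : P 0 -> P 1 -> P 2%:R -> forall i, P i.
Proof.
move=> P0 P1 P2 [[|[|[|i]]] lt_i3] //.
- by rewrite (_ : Ordinal _ = 0) //; apply: val_inj.
- by rewrite (_ : Ordinal _ = 1) //; apply: val_inj.
- by rewrite (_ : Ordinal _ = 2%:R) //; apply: val_inj.
Qed.

Lemma mnm_of_inj : injective mnm_of.
Proof.
move=> [[a b] c] [[a' b'] c'] /mnmP eq_mm'.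
by move: (eq_mm' 0) (eq_mm' 1) (eq_mm' 2%:R); rewrite !mnm_ofE /mono_exp /= => -> -> ->.
Qed.

Lemma mnm_of_coords (k : 'X_{1..3}) : k = mnm_of (k 0, k 1, k 2%:R).
Proof. by apply/mnmP; apply: ord3P; rewrite mnm_ofE. Qed.

Lemma mnm_of_add m m' : mnm_of (mono_add m m') = (mnm_of m + mnm_of m')%MM.
Proof. by apply/mnmP; apply: ord3P; rewrite mnmDE !mnm_ofE. Qed.

Lemma mnm_of_dec (i : 'I_3) m : mnm_of (mono_dec i m) = (mnm_of m - U_(i))%MM.
Proof.
apply/mnmP => j; rewrite mnmBE mnm1E !mnm_ofE.
by move: i j; apply: ord3P; apply: ord3P.
Qed.

Lemma mdeg_mnm_of m : mdeg (mnm_of m) = mono_deg m.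
Proof. by rewrite mdegE !big_ord_recl big_ord0 !mnm_ofE addn0 addnA. Qed.

Lemma mnm_of0 : mnm_of (0, 0, 0)%nat = 0%MM.
Proof. by apply/mnmP; apply: ord3P; rewrite mnm_ofE mnm0E. Qed.

Lemma mnm_of_unit :
  [/\ mnm_of (1, 0, 0)%nat = mnm1 0, mnm_of (0, 1, 0)%nat = mnm1 1
    & mnm_of (0, 0, 1)%nat = mnm1 2%:R].
Proof. by split; apply/mnmP; apply: ord3P; rewrite mnm_ofE mnm1E. Qed.

Definition monos_of_deg (d : nat) : seq mono :=
  [seq m <- [seq (ij, k) | ij <- [seq (i, j) | i <- iota 0 d.+1, j <- iota 0 d.+1],
                          k <- iota 0 d.+1] | mono_deg m == d].

Lemma mem_monos_of_deg d m : (m \in monos_of_deg d) = (mono_deg m == d).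
Proof.
rewrite mem_filter; case: eqP => // deg_m; rewrite andTb.
case: m deg_m => [[i j] k] deg_m.
have mem_iota_d n : (n <= d)%nat -> n \in iota 0 d.+1 by rewrite mem_iota.
have [le_id le_jd le_kd] : [/\ i <= d, j <= d & k <= d]%nat.
  by rewrite -deg_m /mono_deg /=; split; lia.
apply/allpairsP; exists ((i, j), k); split; rewrite ?mem_iota_d //.
by apply/allpairsP; exists (i, j); rewrite !mem_iota_d.
Qed.

Lemma uniq_monos_of_deg d : uniq (monos_of_deg d).
Proof.
apply/filter_uniq/allpairs_uniq; [|exact: iota_uniq|by move=> [? ?] [? ?]].
by apply: allpairs_uniq; [exact: iota_uniq|exact: iota_uniq|move=> [? ?] [? ?]].
Qed.

Lemma dhomog_expansion (p : {mpoly algC[3]}) d : p \is d.-homog ->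
  p = \sum_(m <- monos_of_deg d) p@_(mnm_of m) *: 'X_[mnm_of m].
Proof.
move=> homog_p; apply/mpolyP => k; rewrite (mnm_of_coords k); set n := (_, _, _).
rewrite raddf_sum /=.
under eq_bigr => m _ do rewrite mcoeffZ mcoeffX (eqtype.inj_eq mnm_of_inj).
have [n_deg|n_deg] := boolP (n \in monos_of_deg d).
  rewrite (bigD1_seq n) ?uniq_monos_of_deg //= eqxx mulr1 big1 ?addr0 // => m.
  by move/negbTE->; rewrite mulr0.
rewrite big1_seq => [|m /andP[_ m_deg]]; last first.
  by case: eqP m_deg => [->|_]; rewrite ?(negbTE n_deg) ?mulr0.
apply: (dhomog_nemf_coeff homog_p).
by rewrite -[X in X != _]/(mdeg (mnm_of n)) mdeg_mnm_of -mem_monos_of_deg.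
Qed.

Lemma dhomog_eq0 (a : {mpoly algC[3]}) r : a \is r.-homog ->
  all (fun m => a@_(mnm_of m) == 0) (monos_of_deg r) -> a = 0.
Proof.
move=> a_homog /allP a_coef0; rewrite (dhomog_expansion a_homog) big1_seq // => m.
by move=> /andP[_ /a_coef0/eqP->]; rewrite scale0r.
Qed.

Lemma jac_syzygy_up (f : {mpoly algC[3]}) r k : jac_syzygy f r -> jac_syzygy f (r + k).
Proof.
move=> [a [b [c [ha hb hc abc_neq0 syz]]]].
pose x0k : {mpoly algC[3]} := 'X_0 ^+ k.
have x0k_homog : x0k \is k.-homog.
  by rewrite -[k]mul1n dhomogMn // dhomogX; apply/eqP; exact: mdeg1.
have x0k_neq0 : x0k != 0.
  rewrite expf_neq0 //; apply/eqP => /(congr1 (mcoeff U_(0))).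
  by rewrite mcoeffX eqxx mcoeff0 => /eqP; rewrite oner_eq0.
exists (a * x0k), (b * x0k), (c * x0k); split; try exact: dhomogM.
  move=> [/eqP a0 [/eqP b0 /eqP c0]]; apply: abc_neq0.
  by move: a0 b0 c0; rewrite !mulf_eq0 (negbTE x0k_neq0) !orbF => /eqP-> /eqP-> /eqP->.
by rewrite -!mulrA ![x0k * _]mulrC !mulrA -!mulrDl syz mul0r.
Qed.

Lemma is_mdr_succ (f : {mpoly algC[3]}) r :
  jac_syzygy f r.+1 -> ~ jac_syzygy f r -> is_mdr f r.+1.
Proof.
move=> syz_r1 no_syz_r; split=> // r' lt_r'r1 syz_r'; apply: no_syz_r.
by rewrite -(subnKC (_ : r' <= r)%nat) //; apply: jac_syzygy_up.
Qed.

Definition cross3 (a b : vec3) : vec3 :=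
  (a.1.2 * b.2 - a.2 * b.1.2, a.2 * b.1.1 - a.1.1 * b.2, a.1.1 * b.1.2 - a.1.2 * b.1.1).

Lemma proportional3_sym v w : proportional3 v w -> proportional3 w v.
Proof.
move=> [k [k_neq0 ->]]; exists k^-1; split; first by rewrite invr_eq0.
by rewrite !mulrA mulVf // !mul1r; case: w => [[]].
Qed.

Lemma proportional3_trans u v w :
  proportional3 u v -> proportional3 v w -> proportional3 u w.
Proof.
move=> [k [k_neq0 ->]] [k' [k'_neq0 ->]]; exists (k * k').
by rewrite mulf_neq0 //= !mulrA.
Qed.

Lemma mult_at_proportional L v w : proportional3 v w -> mult_at L v = mult_at L w.
Proof.
move=> [k [k_neq0 ->]]; apply: eq_count => l /=.
rewrite (_ : dot3 l _ = k * dot3 l w); last by rewrite /dot3 /=; ring.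
by rewrite mulf_eq0 (negbTE k_neq0).
Qed.

Lemma cross3_proportional v w : proportional3 v w -> cross3 v w = (0, 0, 0).
Proof. by move=> [k [_ ->]]; rewrite /cross3 /=; congr (_, _, _); ring. Qed.

Lemma proportional3_of_scale (a b : vec3) k :
  nonzero3 b -> b = (k * a.1.1, k * a.1.2, k * a.2) -> proportional3 b a.
Proof.
move=> b_neq0 def_b; exists k; split=> //; apply: contra_notN b_neq0 => /eqP k0.
by rewrite def_b k0 !mul0r.
Qed.

Lemma ratio_of_minor (p q x y : algC) : p != 0 -> p * y = x * q -> y = q / p * x.
Proof. by move=> p_neq0 minor; apply: (mulfI p_neq0); rewrite minor; field. Qed.

Lemma cross3_eq0_proportional a b :
  nonzero3 a -> nonzero3 b -> cross3 a b = (0, 0, 0) -> proportional3 b a.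
Proof.
case: a => [[a1 a2] a3]; case: b => [[b1 b2] b3]; rewrite /cross3 /=.
move=> a_neq0 b_neq0 [/subr0_eq m23 /subr0_eq m31 /subr0_eq m12].
have [a1_0|a1_neq0] := eqVneq a1 0.
  have [a2_0|a2_neq0] := eqVneq a2 0.
    have a3_neq0 : a3 != 0 by apply: contra_notN a_neq0 => /eqP a3_0; rewrite a1_0 a2_0 a3_0.
    apply: (proportional3_of_scale (k := b3 / a3)) => //; congr (_, _, _).
    - by apply: ratio_of_minor; rewrite // -m31 a1_0 mul0r.
    - by apply: ratio_of_minor; rewrite // m23 a2_0 mul0r.
    - by rewrite mulfVK.
  apply: (proportional3_of_scale (k := b2 / a2)) => //; congr (_, _, _).
  - by apply: ratio_of_minor; rewrite // -m12 a1_0 mul0r.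
  - by rewrite mulfVK.
  - exact: ratio_of_minor.
apply: (proportional3_of_scale (k := b1 / a1)) => //; congr (_, _, _).
- by rewrite mulfVK.
- exact: ratio_of_minor.
- by apply: ratio_of_minor; rewrite // m31.
Qed.

Lemma cross3_cross3 l l' v :
  cross3 (cross3 l l') v =
  (dot3 l v * l'.1.1 - dot3 l' v * l.1.1, dot3 l v * l'.1.2 - dot3 l' v * l.1.2,
   dot3 l v * l'.2 - dot3 l' v * l.2).
Proof.
by case: l l' v => [[? ?] ?] [[? ?] ?] [[? ?] ?]; rewrite /cross3 /dot3 /=; congr (_, _, _); ring.
Qed.

Lemma proportional3P v w :
  nonzero3 v -> nonzero3 w -> reflect (proportional3 v w) (cross3 v w == (0, 0, 0)).
Proof.
move=> v_neq0 w_neq0; apply: (iffP eqP); last exact: cross3_proportional.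
by move=> vw0; apply/proportional3_sym/cross3_eq0_proportional.
Qed.

Lemma card_P2_le P n m : card_P2 P n -> card_P2 P m -> (n <= m)%nat.
Proof.
move=> [s [_ s_pts s_distinct _]] [t [size_t t_pts _ t_all]].
pose hit v w := cross3 v w == (0, 0, 0).
pose f i := find (hit (nth (0, 0, 0) s i)) t.
have f_hit i : (i < n)%nat ->
    (f i < m)%nat /\ proportional3 (nth (0, 0, 0) s i) (nth (0, 0, 0) t (f i)).
  move=> lt_in; have [s_i_neq0 P_s_i] := s_pts i lt_in.
  have [j lt_jm s_i_t_j] := t_all _ s_i_neq0 P_s_i.
  have has_hit : has (hit (nth (0, 0, 0) s i)) t.
    apply/hasP; exists (nth (0, 0, 0) t j); first by rewrite mem_nth ?size_t.
    exact/eqP/cross3_proportional.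
  have lt_fm : (f i < m)%nat by rewrite -size_t -has_find.
  have [t_f_neq0 _] := t_pts _ lt_fm.
  by split=> //; apply/(proportional3P s_i_neq0 t_f_neq0); exact: (nth_find (0, 0, 0) has_hit).
suff: (size (map f (iota 0 n)) <= size (iota 0 m))%nat.
  by rewrite size_map size_iota (size_iota 0 m).
apply: uniq_leq_size => [|_ /mapP[i + ->]]; last first.
  by rewrite !mem_iota !leq0n !add0n => /f_hit[].
rewrite map_inj_in_uniq ?iota_uniq // => i i'.
rewrite !mem_iota !leq0n !add0n => lt_in lt_i'n f_ii'.
apply/eqP; apply: contraT => /eqP neq_ii'; case: (s_distinct i i' lt_in lt_i'n neq_ii').
have [_ s_i_t] := f_hit i lt_in; have [_ s_i'_t] := f_hit i' lt_i'n.
by apply: proportional3_trans s_i_t _; rewrite f_ii'; exact: proportional3_sym.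
Qed.

Lemma card_P2_unique P n m : card_P2 P n -> card_P2 P m -> n = m.
Proof. by move=> Pn Pm; apply/eqP; rewrite eqn_leq !(card_P2_le Pn Pm, card_P2_le Pm Pn). Qed.

Lemma count_ge2_pair (T : eqType) (a : pred T) (s : seq T) : uniq s -> (2 <= count a s)%nat ->
  exists x y, [/\ x \in s, y \in s, x != y, a x & a y].
Proof.
move=> s_uniq count_ge2.
have /hasP[x x_in ax] : has a s by rewrite has_count; lia.
have /hasP[y y_in ay] : has a (rem x s).
  by rewrite has_count; move/permP/(_ a): (perm_to_rem x_in) => /=; rewrite ax; lia.
exists x, y; split=> //; first exact: mem_rem y_in.
by apply: contraTneq y_in => <-; rewrite mem_rem_uniqF.
Qed.

Definition gauss := (Z * Z)%type.
Definition g0 : gauss := (0, 0)%Z.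
Definition g1 : gauss := (1, 0)%Z.
Definition gnat (k : nat) : gauss := (Z.of_nat k, 0%Z).
Definition gadd (x y : gauss) : gauss := (x.1 + y.1, x.2 + y.2)%Z.
Definition gopp (x : gauss) : gauss := (- x.1, - x.2)%Z.
Definition gsub (x y : gauss) : gauss := gadd x (gopp y).
Definition gmul (x y : gauss) : gauss := (x.1 * y.1 - x.2 * y.2, x.1 * y.2 + x.2 * y.1)%Z.
Definition gauss_eq0 (x : gauss) : bool := (x.1 =? 0)%Z && (x.2 =? 0)%Z.

Section GaussianEvaluation.
Variable e : algC.
Hypothesis he : e ^+ 2 + 1 = 0.

Definition gval (x : gauss) : algC := zr x.1 + zr x.2 * e.

Let eM : e * e = -1.
Proof. by apply/eqP; rewrite -expr2 -addr_eq0 he. Qed.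

Lemma gval0 : gval g0 = 0. Proof. by rewrite /gval /= mul0r addr0. Qed.
Lemma gval1 : gval g1 = 1. Proof. by rewrite /gval /= mul0r addr0. Qed.
Lemma gval_nat k : gval (gnat k) = k%:R.
Proof. by rewrite /gval /= zr_nat mul0r addr0. Qed.
Lemma gvalD x y : gval (gadd x y) = gval x + gval y.
Proof. by rewrite /gval /= !zrD; ring. Qed.
Lemma gvalN x : gval (gopp x) = - gval x.
Proof. by rewrite /gval /= !zrN; ring. Qed.
Lemma gvalB x y : gval (gsub x y) = gval x - gval y.
Proof. by rewrite gvalD gvalN. Qed.
Lemma gvalM x y : gval (gmul x y) = gval x * gval y.
Proof.
by rewrite /gval /= -Z.add_opp_r !zrD zrN !zrM; ring: eM.
Qed.

Lemma gval_eq0 x : (gval x == 0) = gauss_eq0 x.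
Proof.
case: x => a b; rewrite /gval /gauss_eq0 /=.
apply/eqP/andP => [gval0|[/Z.eqb_spec -> /Z.eqb_spec ->]]; last by rewrite mul0r addr0.
have norm0 : zr (a * a + b * b)%Z = 0.
  have ha : zr a = - (zr b * e) by apply/eqP; rewrite -addr_eq0 gval0.
  by rewrite zrD !zrM ha; ring: eM.
move/eqP: norm0; rewrite zr_eq0 => /Z.eqb_spec norm0.
by split; apply/Z.eqb_spec; nia.
Qed.

(* A monomial may occur several times in a sparse polynomial; [scoef] adds up its coefficients. *)
Definition spoly := seq (mono * gauss).

Definition scoef (p : spoly) (n : mono) : gauss :=
  foldr (fun x acc => if x.1 == n then gadd x.2 acc else acc) g0 p.

Definition szero (p : spoly) : bool := all (fun x => gauss_eq0 (scoef p x.1)) p.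

Definition smul (p q : spoly) : spoly :=
  [seq (mono_add x.1 y.1, gmul x.2 y.2) | x <- p, y <- q].

Definition snorm (p : spoly) : spoly := [seq (n, scoef p n) | n <- undup (map fst p)].

(* Where [mono_dec] truncates a zero exponent, the coefficient vanishes anyway. *)
Definition sderiv (i : 'I_3) (p : spoly) : spoly :=
  [seq (mono_dec i x.1, gmul (gnat (mono_exp x.1 i)) x.2) | x <- p].

Definition gvec := (gauss * gauss * gauss)%type.

Definition slin (l : gvec) : spoly :=
  [:: ((1, 0, 0)%nat, l.1.1); ((0, 1, 0)%nat, l.1.2); ((0, 0, 1)%nat, l.2)].

(* [snorm] merges repeated monomials, which keeps the iterated products small. *)
Definition sprod (L : seq gvec) : spoly :=
  foldr (fun l p => snorm (smul (slin l) p)) [:: ((0, 0, 0)%nat, g1)] L.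

Definition sjac (L : seq gvec) (i : 'I_3) : spoly := snorm (sderiv i (sprod L)).

Lemma scoef_notin p n : n \notin map fst p -> scoef p n = g0.
Proof.
elim: p => [//|x p IHp]; rewrite /= in_cons negb_or => /andP[n_neq_x n_notin].
by rewrite eq_sym (negbTE n_neq_x) IHp.
Qed.

Lemma scoef_snorm p n : scoef (snorm p) n = scoef p n.
Proof.
have gaddg0 x : gadd x g0 = x by case: x => a b; rewrite /gadd !Z.add_0_r.
have map_fst_graph s : map fst [seq (k, scoef p k) | k <- s] = s by elim: s => //= k s ->.
rewrite /snorm; have [n_in|n_notin] := boolP (n \in map fst p); last first.
  by rewrite !scoef_notin // map_fst_graph mem_undup.
rewrite -mem_undup in n_in; elim: (undup _) (undup_uniq (map fst p)) n_in => //= k s IHs.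
move=> /andP[k_notin s_uniq]; rewrite in_cons; case: (eqVneq n k) => [-> _|_ /IHs->//].
by rewrite (@scoef_notin [seq (k, scoef p k) | k <- s]) ?map_fst_graph ?gaddg0.
Qed.

Definition seval (p : spoly) : {mpoly algC[3]} := \sum_(x <- p) gval x.2 *: 'X_[mnm_of x.1].

Definition gval3 (v : gvec) : vec3 := (gval v.1.1, gval v.1.2, gval v.2).

Lemma mcoeff_seval p n : (seval p)@_(mnm_of n) = gval (scoef p n).
Proof.
elim: p => [|x p IHp]; first by rewrite /seval big_nil mcoeff0 gval0.
rewrite /seval big_cons mcoeffD mcoeffZ mcoeffX -/(seval p) IHp /=.
by rewrite (eqtype.inj_eq mnm_of_inj); case: eqP => _; rewrite ?mulr1 ?gvalD // mulr0 add0r.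
Qed.

Lemma eq_seval p q : scoef p =1 scoef q -> seval p = seval q.
Proof.
by move=> eq_pq; apply/mpolyP => k; rewrite (mnm_of_coords k) !mcoeff_seval eq_pq.
Qed.

Lemma seval_eq0P p : reflect (seval p = 0) (szero p).
Proof.
apply: (iffP allP) => [p_coef0|p0 x _]; last by rewrite -gval_eq0 -mcoeff_seval p0 mcoeff0.
apply/mpolyP => k; rewrite mcoeff0 (mnm_of_coords k) mcoeff_seval; set n := (_, _, _).
have [/mapP[x /p_coef0 x_coef0 ->]|/scoef_notin->] := boolP (n \in map fst p); last exact: gval0.
by apply/eqP; rewrite gval_eq0.
Qed.

Lemma seval_cat p q : seval (p ++ q) = seval p + seval q.
Proof. by rewrite /seval big_cat. Qed.

Lemma seval_mul p q : seval (smul p q) = seval p * seval q.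
Proof.
rewrite /seval big_allpairs_dep mulr_suml; apply: eq_bigr => x _.
rewrite mulr_sumr; apply: eq_bigr => y _ /=.
by rewrite gvalM mnm_of_add mpolyXD -scalerAl -scalerAr scalerA.
Qed.

Lemma seval_norm p : seval (snorm p) = seval p.
Proof. by apply: eq_seval => n; rewrite scoef_snorm. Qed.

Lemma seval_deriv i p : mderiv i (seval p) = seval (sderiv i p).
Proof.
elim: p => [|x p IHp]; first by rewrite /seval !big_nil mderiv0.
rewrite /seval !big_cons mderivD mderivZ -/(seval p) IHp mderivX mnm_ofE -mnm_of_dec.
by rewrite /= gvalM gval_nat scalerA mulrC.
Qed.

Lemma seval_lin l : seval (slin l) = lin_form (gval3 l).
Proof.
have [U0 U1 U2] := mnm_of_unit.
by rewrite /seval /slin !big_cons big_nil /= U0 U1 U2 addr0 addrA.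
Qed.

Lemma seval_prod L : seval (sprod L) = arr_poly (map gval3 L).
Proof.
rewrite /arr_poly big_map; elim: L => [|l L IHL] /=.
  by rewrite big_nil /seval big_cons big_nil addr0 gval1 scale1r mnm_of0 mpolyX0.
by rewrite big_cons seval_norm seval_mul IHL seval_lin.
Qed.

Lemma mderiv_arr_poly L i : mderiv i (arr_poly (map gval3 L)) = seval (sjac L i).
Proof. by rewrite /sjac seval_norm -seval_deriv seval_prod. Qed.

Lemma seval_homog p d : all (fun x => mono_deg x.1 == d) p -> seval p \is d.-homog.
Proof.
move=> /allP p_deg; rewrite /seval big_seq; apply: rpred_sum => x /p_deg x_deg.
by rewrite rpredZ // dhomogX -(eqP x_deg); apply/eqP; exact: mdeg_mnm_of.
Qed.

Definition mpair (w : spoly) (p : {mpoly algC[3]}) : algC :=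
  \sum_(x <- w) gval x.2 * p@_(mnm_of x.1).

Lemma mpair_lincomb w (cq : seq (algC * {mpoly algC[3]})) :
  mpair w (\sum_(j <- cq) j.1 *: j.2) = \sum_(j <- cq) j.1 * mpair w j.2.
Proof.
rewrite /mpair; under eq_bigr do rewrite raddf_sum mulr_sumr.
rewrite exchange_big; apply: eq_bigr => j _; rewrite mulr_sumr; apply: eq_bigr => x _.
by rewrite /= mcoeffZ mulrCA.
Qed.

Lemma lincomb_separated_eq0 (cq : seq (algC * {mpoly algC[3]})) (W : seq spoly) :
  (forall j k, (j < size cq)%nat -> (k < size cq)%nat ->
     (mpair (nth [::] W k) (nth (0, 0) cq j).2 != 0) = (j == k)) ->
  \sum_(j <- cq) j.1 *: j.2 = 0 -> all (fun j => j.1 == 0) cq.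
Proof.
move=> dual comb0; apply/(all_nthP (0, 0)) => k lt_k.
have mpair0 w : mpair w 0 = 0 by rewrite /mpair big1 // => x _; rewrite mcoeff0 mulr0.
have := congr1 (mpair (nth [::] W k)) comb0.
rewrite mpair_lincomb mpair0 (big_nth (0, 0)) big_mkord (bigD1 (Ordinal lt_k)) //=.
rewrite big1 => [|j /eqP neq_jk]; last first.
  have /negbFE/eqP-> : (mpair (nth [::] W k) (nth (0, 0) cq j).2 != 0) = false.
    by rewrite dual //; apply/eqP => eq_jk; apply: neq_jk; apply: val_inj.
  by rewrite mulr0.
have pair_kk : mpair (nth [::] W k) (nth (0, 0) cq k).2 != 0 by rewrite dual // eqxx.
by rewrite addr0 => /eqP; rewrite mulf_eq0 (negbTE pair_kk) orbF.
Qed.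

Definition spair (w q : spoly) : gauss :=
  foldr (fun x acc => gadd (gmul x.2 (scoef q x.1)) acc) g0 w.

Lemma gval_spair w q : gval (spair w q) = mpair w (seval q).
Proof.
rewrite /mpair; elim: w => [|x w IHw]; first by rewrite big_nil gval0.
by rewrite big_cons /= gvalD gvalM IHw mcoeff_seval.
Qed.

Definition separates (W Q : seq spoly) : bool :=
  all (fun k => all (fun j => ~~ gauss_eq0 (spair (nth [::] W k) (nth [::] Q j)) == (j == k))
                    (iota 0 (size Q)))
      (iota 0 (size Q)).

Lemma separatesP W Q j k : separates W Q -> (j < size Q)%nat -> (k < size Q)%nat ->
  (mpair (nth [::] W k) (seval (nth [::] Q j)) != 0) = (j == k).
Proof.
move=> /allP sep lt_jQ lt_kQ; have in_iota i : (i < size Q)%nat -> i \in iota 0 (size Q).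
  by rewrite mem_iota leq0n add0n.
have /eqP := allP (sep k (in_iota k lt_kQ)) j (in_iota j lt_jQ).
by rewrite -gval_spair gval_eq0.
Qed.

Definition jac_shifts (L : seq gvec) (r : nat) : seq spoly :=
  flatten [seq [seq smul [:: (m, g1)] (sjac L i) | m <- monos_of_deg r] | i <- [:: 0; 1; 2%:R]].

Lemma dhomog_mul_expansion (a : {mpoly algC[3]}) r F : a \is r.-homog ->
  a * seval F = \sum_(m <- monos_of_deg r) a@_(mnm_of m) *: seval (smul [:: (m, g1)] F).
Proof.
move=> a_homog; rewrite {1}(dhomog_expansion a_homog) mulr_suml; apply: eq_bigr => m _.
by rewrite seval_mul /seval big_seq1 gval1 scale1r scalerAl.
Qed.

Lemma no_jac_syzygy_of_cert L r W :
  separates W (jac_shifts L r) -> ~ jac_syzygy (arr_poly (map gval3 L)) r.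
Proof.
move=> sep [a [b [c [ha hb hc abc_neq0 syz]]]]; apply: abc_neq0.
pose terms (p : {mpoly algC[3]}) i :=
  [seq (p@_(mnm_of m), seval (smul [:: (m, g1)] (sjac L i))) | m <- monos_of_deg r].
pose cq := terms a 0 ++ terms b 1 ++ terms c 2%:R.
have map_snd_cq : map snd cq = map seval (jac_shifts L r).
  by rewrite /jac_shifts /= cats0 !map_cat -!map_comp.
have cq_comb0 : \sum_(j <- cq) j.1 *: j.2 = 0.
  rewrite !mderiv_arr_poly !(dhomog_mul_expansion _ ha, dhomog_mul_expansion _ hb,
    dhomog_mul_expansion _ hc) in syz.
  by rewrite !big_cat !big_map /= addrA.
have dual j k : (j < size cq)%nat -> (k < size cq)%nat ->
    (mpair (nth [::] W k) (nth (0, 0) cq j).2 != 0) = (j == k).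
  have size_cq : size cq = size (jac_shifts L r).
    by rewrite -(size_map snd) map_snd_cq size_map.
  rewrite size_cq => lt_j lt_k; rewrite -(nth_map _ 0 snd) ?size_cq // map_snd_cq.
  by rewrite (nth_map [::]) // separatesP.
have := lincomb_separated_eq0 dual cq_comb0.
by rewrite !all_cat !all_map => /and3P[/(dhomog_eq0 ha) ? /(dhomog_eq0 hb) ? /(dhomog_eq0 hc)].
Qed.

Definition syzygy_cert (L : seq gvec) (r : nat) (A B C : spoly) : bool :=
  [&& all (fun x => mono_deg x.1 == r) (A ++ B ++ C), ~~ szero A &
      szero (smul A (sjac L 0) ++ smul B (sjac L 1) ++ smul C (sjac L 2%:R))].

Lemma jac_syzygy_of_cert L r A B C :
  syzygy_cert L r A B C -> jac_syzygy (arr_poly (map gval3 L)) r.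
Proof.
rewrite /syzygy_cert !all_cat => /and3P[/and3P[A_deg B_deg C_deg] /seval_eq0P A_neq0 /seval_eq0P].
rewrite !seval_cat !seval_mul -!mderiv_arr_poly addrA => syz.
by exists (seval A), (seval B), (seval C); split; rewrite ?seval_homog // => -[].
Qed.

Definition gdot (l v : gvec) : gauss :=
  gadd (gadd (gmul l.1.1 v.1.1) (gmul l.1.2 v.1.2)) (gmul l.2 v.2).

Definition gcross (a b : gvec) : gvec :=
  (gsub (gmul a.1.2 b.2) (gmul a.2 b.1.2), gsub (gmul a.2 b.1.1) (gmul a.1.1 b.2),
   gsub (gmul a.1.1 b.1.2) (gmul a.1.2 b.1.1)).

Definition gvec_eq0 (v : gvec) : bool := [&& gauss_eq0 v.1.1, gauss_eq0 v.1.2 & gauss_eq0 v.2].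

Definition gmult (L : seq gvec) (v : gvec) : nat := count (fun l => gauss_eq0 (gdot l v)) L.

Definition distinct_points (P : seq gvec) : bool :=
  [&& uniq P, all (fun p => ~~ gvec_eq0 p) P &
      all (fun p => all (fun q => (p == q) || ~~ gvec_eq0 (gcross p q)) P) P].

Definition lines_meeting_in (L P : seq gvec) : bool :=
  [&& uniq L, all (fun l => ~~ gvec_eq0 l) L &
      all (fun l => all (fun l' => (l == l') || ~~ gvec_eq0 (gcross l l') &&
                                   has (fun p => gvec_eq0 (gcross (gcross l l') p)) P) L) L].

Lemma gval3_dot l v : dot3 (gval3 l) (gval3 v) = gval (gdot l v).
Proof. by rewrite /dot3 /gdot /= !gvalD !gvalM. Qed.

Lemma gval3_cross a b : cross3 (gval3 a) (gval3 b) = gval3 (gcross a b).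
Proof. by rewrite /cross3 /gcross /gval3 /= !gvalB !gvalM. Qed.

Lemma gval3_eq0 v : (gval3 v == (0, 0, 0)) = gvec_eq0 v.
Proof. by rewrite /gvec_eq0 -!gval_eq0 !xpair_eqE andbA. Qed.

Lemma gval3_neq0 v : ~~ gvec_eq0 v -> nonzero3 (gval3 v).
Proof. by rewrite -gval3_eq0 => /eqP. Qed.

Lemma gval3_not_proportional p q : ~~ gvec_eq0 (gcross p q) -> ~ proportional3 (gval3 p) (gval3 q).
Proof.
by move=> pq_neq0 /cross3_proportional; rewrite gval3_cross; apply/eqP; rewrite gval3_eq0.
Qed.

Lemma mult_at_gval3 L v : mult_at (map gval3 L) (gval3 v) = gmult L v.
Proof. by rewrite /mult_at count_map; apply: eq_count => l /=; rewrite gval3_dot gval_eq0. Qed.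

Lemma reduced_arr_of_cert L P : lines_meeting_in L P -> reduced_arr (map gval3 L).
Proof.
move=> /and3P[L_uniq /allP L_neq0 /allP L_meet]; rewrite /reduced_arr size_map.
split=> [k lt_kL|k k' lt_kL lt_k'L neq_kk']; rewrite !(nth_map (g0, g0, g0)) //.
  exact/gval3_neq0/L_neq0/mem_nth.
apply: gval3_not_proportional.
have /allP/(_ _ (mem_nth (g0, g0, g0) lt_k'L)) := L_meet _ (mem_nth (g0, g0, g0) lt_kL).
by rewrite nth_uniq // => /orP[/eqP // | /andP[]].
Qed.

Lemma mult_ge2_point L P v : lines_meeting_in L P -> all (fun p => ~~ gvec_eq0 p) P ->
  nonzero3 v -> (2 <= mult_at (map gval3 L) v)%nat ->
  exists2 p, p \in P & proportional3 v (gval3 p).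
Proof.
move=> /and3P[L_uniq _ /allP L_meet] /allP P_neq0 v_neq0; rewrite /mult_at count_map.
move=> /(count_ge2_pair L_uniq)[l [l' [l_in l'_in neq_ll' /= /eqP l_v /eqP l'_v]]].
have /allP/(_ _ l'_in) := L_meet _ l_in; rewrite (negbTE neq_ll') /=.
move=> /andP[ll'_neq0 /hasP[p p_in ll'_p]]; exists p => //.
have ll'_prop q : nonzero3 q -> cross3 (gval3 (gcross l l')) q = (0, 0, 0) ->
    proportional3 q (gval3 (gcross l l')).
  by apply: cross3_eq0_proportional; apply: gval3_neq0.
apply: proportional3_trans (ll'_prop _ v_neq0 _) _.
  by rewrite -gval3_cross cross3_cross3 l_v l'_v !mul0r subrr.
apply/proportional3_sym/ll'_prop; first exact/gval3_neq0/P_neq0.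
by apply/eqP; rewrite gval3_cross gval3_eq0.
Qed.

Lemma n_pts_of_cert L P i : distinct_points P -> lines_meeting_in L P -> (2 <= i)%nat ->
  n_pts (map gval3 L) i (count (fun p => gmult L p == i) P).
Proof.
move=> /and3P[P_uniq P_neq0 /allP P_distinct] L_meet le2i.
rewrite -size_filter; set Pi := filter _ P; pose o := (g0, g0, g0).
have Pi_nth k : (k < size Pi)%nat -> nth o Pi k \in P /\ gmult L (nth o Pi k) = i.
  by move=> /(mem_nth o); rewrite mem_filter => /andP[/eqP].
exists (map gval3 Pi); rewrite size_map.
split=> // [k lt_k|k k' lt_k lt_k' neq_kk'|v v_neq0 mult_v].
- have [p_in mult_p] := Pi_nth k lt_k; rewrite (nth_map o) // mult_at_gval3.
  by split=> //; apply/gval3_neq0/(allP P_neq0).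
- rewrite !(nth_map o) //; apply: gval3_not_proportional.
  have /allP := P_distinct _ (Pi_nth k lt_k).1; move/(_ _ (Pi_nth k' lt_k').1).
  by rewrite nth_uniq ?filter_uniq // => /orP[/eqP|].
have [p p_in v_p] : exists2 p, p \in P & proportional3 v (gval3 p).
  by apply: mult_ge2_point L_meet P_neq0 v_neq0 _; rewrite mult_v.
have p_in_Pi : p \in Pi.
  by rewrite mem_filter -mult_at_gval3 -(mult_at_proportional _ v_p) mult_v eqxx.
exists (index p Pi); first by rewrite index_mem.
by rewrite (nth_map o) ?index_mem // nth_index.
Qed.

Lemma same_weak_comb_of_cert L1 P1 L2 P2 :
  distinct_points P1 -> lines_meeting_in L1 P1 ->
  distinct_points P2 -> lines_meeting_in L2 P2 ->
  size L1 = size L2 -> perm_eq (map (gmult L1) P1) (map (gmult L2) P2) ->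
  same_weak_comb (map gval3 L1) (map gval3 L2).
Proof.
move=> P1_ok L1_ok P2_ok L2_ok size_L mult_perm; split=> [|i le2i n]; first by rewrite !size_map.
have := n_pts_of_cert P1_ok L1_ok le2i; have := n_pts_of_cert P2_ok L2_ok le2i.
have /permP/(_ (pred1 i)) := mult_perm; rewrite !count_map => -> n_pts2 n_pts1.
by split=> [/(card_P2_unique n_pts1)|/(card_P2_unique n_pts2)] <-.
Qed.

End GaussianEvaluation.

(* The data below were found by computer algebra and are only checked here.  Each
   row of a [_dual_rows] matrix lists the coefficients of a functional on the
   monomials of the corresponding [_dual_support]. *)
Section Certificates.
Local Open Scope Z_scope.

Definition L9_lines : seq gvec := [::
  ((0, 0), (1, 0), (0, 0)); ((0, 0), (1, 0), (-1, 0)); ((0, 0), (1, 0), (1, 0));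
  ((-1, 0), (1, 0), (0, 0)); ((1, 0), (1, 0), (0, 0)); ((-1, 0), (1, 0), (-2, 0));
  ((-1, 0), (1, 0), (2, 0)); ((1, 0), (1, 0), (-2, 0)); ((1, 0), (1, 0), (2, 0))].

Definition L9_points : seq gvec := [::
  ((-1, 0), (0, 0), (0, 0)); ((0, 0), (0, 0), (1, 0)); ((-2, 0), (0, 0), (1, 0));
  ((2, 0), (0, 0), (1, 0)); ((1, 0), (1, 0), (1, 0)); ((1, 0), (-1, 0), (-1, 0));
  ((3, 0), (1, 0), (1, 0)); ((3, 0), (-1, 0), (-1, 0)); ((-1, 0), (-1, 0), (1, 0));
  ((-1, 0), (1, 0), (-1, 0)); ((-3, 0), (-1, 0), (1, 0)); ((-3, 0), (1, 0), (-1, 0));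
  ((-2, 0), (-2, 0), (0, 0)); ((-2, 0), (2, 0), (0, 0)); ((0, 0), (-4, 0), (-2, 0));
  ((0, 0), (4, 0), (-2, 0))].

Definition L9_syz_a : spoly := [::
  ((0, 2, 2)%nat, (-36, 0)); ((0, 4, 0)%nat, (9, 0)); ((2, 0, 2)%nat, (12, 0));
  ((4, 0, 0)%nat, (-1, 0))].

Definition L9_syz_b : spoly := [::
  ((1, 1, 2)%nat, (-24, 0)); ((1, 3, 0)%nat, (6, 0)); ((3, 1, 0)%nat, (2, 0))].

Definition L9_syz_c : spoly := [::
  ((1, 2, 1)%nat, (-18, 0)); ((3, 0, 1)%nat, (2, 0))].

Definition L9_dual_support : seq mono := [::
  (0, 2, 9)%nat; (0, 3, 8)%nat; (0, 4, 7)%nat; (0, 5, 6)%nat; (0, 6, 5)%nat; (0, 7, 4)%nat;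
  (0, 8, 3)%nat; (0, 9, 2)%nat; (1, 1, 9)%nat; (1, 2, 8)%nat; (1, 3, 7)%nat; (1, 4, 6)%nat;
  (1, 5, 5)%nat; (1, 6, 4)%nat; (1, 7, 3)%nat; (1, 9, 1)%nat; (1, 10, 0)%nat; (2, 1, 8)%nat;
  (2, 2, 7)%nat; (2, 3, 6)%nat; (2, 4, 5)%nat; (2, 5, 4)%nat; (2, 6, 3)%nat; (2, 9, 0)%nat;
  (3, 0, 8)%nat; (3, 1, 7)%nat; (3, 2, 6)%nat; (3, 3, 5)%nat; (3, 4, 4)%nat; (4, 1, 6)%nat].

Definition L9_dual_rows : seq (seq gauss) := [::
  [:: (0, 0); (0, 0); (0, 0); (0, 0); (0, 0); (0, 0); (0, 0); (0, 0); (1, 0); (0, 0); (0, 0);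
     (0, 0); (0, 0); (0, 0); (0, 0); (0, 0); (0, 0); (0, 0); (0, 0); (0, 0); (0, 0); (0, 0);
     (0, 0); (0, 0); (0, 0); (0, 0); (0, 0); (0, 0); (0, 0); (0, 0)];
  [:: (0, 0); (0, 0); (0, 0); (0, 0); (0, 0); (0, 0); (0, 0); (0, 0); (0, 0); (1, 0); (0, 0);
     (0, 0); (0, 0); (0, 0); (0, 0); (0, 0); (0, 0); (0, 0); (0, 0); (0, 0); (0, 0); (0, 0);
     (0, 0); (0, 0); (3, 0); (0, 0); (0, 0); (0, 0); (0, 0); (0, 0)];
  [:: (0, 0); (0, 0); (0, 0); (0, 0); (0, 0); (0, 0); (0, 0); (0, 0); (-13, 0); (0, 0); (-4, 0);
     (0, 0); (-16, 0); (0, 0); (-64, 0); (-256, 0); (0, 0); (0, 0); (0, 0); (0, 0); (0, 0);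
     (0, 0); (0, 0); (0, 0); (0, 0); (0, 0); (0, 0); (0, 0); (0, 0); (0, 0)];
  [:: (0, 0); (0, 0); (0, 0); (0, 0); (0, 0); (0, 0); (0, 0); (0, 0); (0, 0); (13, 0); (0, 0);
     (16, 0); (0, 0); (16, 0); (0, 0); (0, 0); (-128, 0); (0, 0); (0, 0); (0, 0); (0, 0);
     (0, 0); (0, 0); (0, 0); (-18, 0); (0, 0); (0, 0); (0, 0); (0, 0); (0, 0)];
  [:: (0, 0); (45, 0); (0, 0); (36, 0); (0, 0); (48, 0); (0, 0); (64, 0); (0, 0); (0, 0);
     (0, 0); (0, 0); (0, 0); (0, 0); (0, 0); (0, 0); (0, 0); (18, 0); (0, 0); (0, 0); (0, 0);
     (0, 0); (0, 0); (0, 0); (0, 0); (0, 0); (0, 0); (0, 0); (0, 0); (0, 0)];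
  [:: (139, 0); (0, 0); (166, 0); (0, 0); (128, 0); (0, 0); (96, 0); (0, 0); (0, 0); (0, 0);
     (0, 0); (0, 0); (0, 0); (0, 0); (0, 0); (0, 0); (0, 0); (0, 0); (114, 0); (0, 0); (96, 0);
     (0, 0); (96, 0); (0, 0); (0, 0); (0, 0); (0, 0); (0, 0); (0, 0); (0, 0)];
  [:: (0, 0); (42, 0); (0, 0); (44, 0); (0, 0); (64, 0); (0, 0); (192, 0); (0, 0); (0, 0);
     (0, 0); (0, 0); (0, 0); (0, 0); (0, 0); (0, 0); (0, 0); (39, 0); (0, 0); (48, 0); (0, 0);
     (48, 0); (0, 0); (-384, 0); (0, 0); (0, 0); (0, 0); (0, 0); (0, 0); (0, 0)];
  [:: (0, 0); (0, 0); (0, 0); (0, 0); (0, 0); (0, 0); (0, 0); (0, 0); (535, 0); (0, 0);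
     (364, 0); (0, 0); (304, 0); (0, 0); (448, 0); (768, 0); (0, 0); (0, 0); (0, 0); (0, 0);
     (0, 0); (0, 0); (0, 0); (0, 0); (0, 0); (144, 0); (0, 0); (0, 0); (0, 0); (0, 0)];
  [:: (0, 0); (0, 0); (0, 0); (0, 0); (0, 0); (0, 0); (0, 0); (0, 0); (0, 0); (625, 0); (0, 0);
     (376, 0); (0, 0); (112, 0); (0, 0); (0, 0); (640, 0); (0, 0); (0, 0); (0, 0); (0, 0);
     (0, 0); (0, 0); (0, 0); (441, 0); (0, 0); (360, 0); (0, 0); (144, 0); (0, 0)];
  [:: (0, 0); (380, 0); (0, 0); (132, 0); (0, 0); (-224, 0); (0, 0); (-832, 0); (0, 0); (0, 0);
     (0, 0); (0, 0); (0, 0); (0, 0); (0, 0); (0, 0); (0, 0); (393, 0); (0, 0); (168, 0); (0, 0);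
     (-48, 0); (0, 0); (1152, 0); (0, 0); (0, 0); (0, 0); (0, 0); (0, 0); (216, 0)];
  [:: (-1, 0); (0, 0); (0, 0); (0, 0); (0, 0); (0, 0); (0, 0); (0, 0); (0, 0); (0, 0); (0, 0);
     (0, 0); (0, 0); (0, 0); (0, 0); (0, 0); (0, 0); (0, 0); (0, 0); (0, 0); (0, 0); (0, 0);
     (0, 0); (0, 0); (0, 0); (0, 0); (0, 0); (0, 0); (0, 0); (0, 0)];
  [:: (0, 0); (27, 0); (0, 0); (36, 0); (0, 0); (48, 0); (0, 0); (64, 0); (0, 0); (0, 0);
     (0, 0); (0, 0); (0, 0); (0, 0); (0, 0); (0, 0); (0, 0); (0, 0); (0, 0); (0, 0); (0, 0);
     (0, 0); (0, 0); (0, 0); (0, 0); (0, 0); (0, 0); (0, 0); (0, 0); (0, 0)];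
  [:: (29, 0); (0, 0); (26, 0); (0, 0); (32, 0); (0, 0); (32, 0); (0, 0); (0, 0); (0, 0);
     (0, 0); (0, 0); (0, 0); (0, 0); (0, 0); (0, 0); (0, 0); (0, 0); (0, 0); (0, 0); (0, 0);
     (0, 0); (0, 0); (0, 0); (0, 0); (0, 0); (0, 0); (0, 0); (0, 0); (0, 0)];
  [:: (0, 0); (-1, 0); (0, 0); (-4, 0); (0, 0); (-16, 0); (0, 0); (-64, 0); (0, 0); (0, 0);
     (0, 0); (0, 0); (0, 0); (0, 0); (0, 0); (0, 0); (0, 0); (0, 0); (0, 0); (0, 0); (0, 0);
     (0, 0); (0, 0); (0, 0); (0, 0); (0, 0); (0, 0); (0, 0); (0, 0); (0, 0)];
  [:: (0, 0); (0, 0); (0, 0); (0, 0); (0, 0); (0, 0); (0, 0); (0, 0); (0, 0); (0, 0); (0, 0);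
     (0, 0); (0, 0); (0, 0); (0, 0); (0, 0); (0, 0); (0, 0); (0, 0); (0, 0); (0, 0); (0, 0);
     (0, 0); (0, 0); (1, 0); (0, 0); (0, 0); (0, 0); (0, 0); (0, 0)];
  [:: (0, 0); (0, 0); (0, 0); (0, 0); (0, 0); (0, 0); (0, 0); (0, 0); (13, 0); (0, 0); (13, 0);
     (0, 0); (16, 0); (0, 0); (16, 0); (0, 0); (0, 0); (0, 0); (0, 0); (0, 0); (0, 0); (0, 0);
     (0, 0); (0, 0); (0, 0); (0, 0); (0, 0); (0, 0); (0, 0); (0, 0)];
  [:: (0, 0); (0, 0); (0, 0); (0, 0); (0, 0); (0, 0); (0, 0); (0, 0); (0, 0); (13, 0); (0, 0);
     (16, 0); (0, 0); (16, 0); (0, 0); (0, 0); (0, 0); (0, 0); (0, 0); (0, 0); (0, 0); (0, 0);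
     (0, 0); (0, 0); (-18, 0); (0, 0); (0, 0); (0, 0); (0, 0); (0, 0)];
  [:: (27, 0); (0, 0); (78, 0); (0, 0); (64, 0); (0, 0); (32, 0); (0, 0); (0, 0); (0, 0);
     (0, 0); (0, 0); (0, 0); (0, 0); (0, 0); (0, 0); (0, 0); (0, 0); (78, 0); (0, 0); (96, 0);
     (0, 0); (96, 0); (0, 0); (0, 0); (0, 0); (0, 0); (0, 0); (0, 0); (0, 0)];
  [:: (0, 0); (77, 0); (0, 0); (60, 0); (0, 0); (16, 0); (0, 0); (-64, 0); (0, 0); (0, 0);
     (0, 0); (0, 0); (0, 0); (0, 0); (0, 0); (0, 0); (0, 0); (78, 0); (0, 0); (96, 0); (0, 0);
     (96, 0); (0, 0); (0, 0); (0, 0); (0, 0); (0, 0); (0, 0); (0, 0); (0, 0)];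
  [:: (0, 0); (0, 0); (0, 0); (0, 0); (0, 0); (0, 0); (0, 0); (0, 0); (0, 0); (232, 0); (0, 0);
     (208, 0); (0, 0); (160, 0); (0, 0); (0, 0); (-512, 0); (0, 0); (0, 0); (0, 0); (0, 0);
     (0, 0); (0, 0); (0, 0); (63, 0); (0, 0); (144, 0); (0, 0); (144, 0); (0, 0)];
  [:: (0, 0); (-39, 0); (0, 0); (-36, 0); (0, 0); (-48, 0); (0, 0); (-64, 0); (0, 0); (0, 0);
     (0, 0); (0, 0); (0, 0); (0, 0); (0, 0); (0, 0); (0, 0); (0, 0); (0, 0); (0, 0); (0, 0);
     (0, 0); (0, 0); (0, 0); (0, 0); (0, 0); (0, 0); (0, 0); (0, 0); (0, 0)];
  [:: (-59, 0); (0, 0); (-38, 0); (0, 0); (-32, 0); (0, 0); (-32, 0); (0, 0); (0, 0); (0, 0);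
     (0, 0); (0, 0); (0, 0); (0, 0); (0, 0); (0, 0); (0, 0); (0, 0); (0, 0); (0, 0); (0, 0);
     (0, 0); (0, 0); (0, 0); (0, 0); (0, 0); (0, 0); (0, 0); (0, 0); (0, 0)];
  [:: (0, 0); (115, 0); (0, 0); (172, 0); (0, 0); (304, 0); (0, 0); (448, 0); (0, 0); (0, 0);
     (0, 0); (0, 0); (0, 0); (0, 0); (0, 0); (0, 0); (0, 0); (0, 0); (0, 0); (0, 0); (0, 0);
     (0, 0); (0, 0); (0, 0); (0, 0); (0, 0); (0, 0); (0, 0); (0, 0); (0, 0)];
  [:: (39, 0); (0, 0); (36, 0); (0, 0); (48, 0); (0, 0); (64, 0); (0, 0); (0, 0); (0, 0);
     (0, 0); (0, 0); (0, 0); (0, 0); (0, 0); (0, 0); (0, 0); (0, 0); (0, 0); (0, 0); (0, 0);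
     (0, 0); (0, 0); (0, 0); (0, 0); (0, 0); (0, 0); (0, 0); (0, 0); (0, 0)];
  [:: (0, 0); (0, 0); (0, 0); (0, 0); (0, 0); (0, 0); (0, 0); (0, 0); (-165, 0); (0, 0);
     (-156, 0); (0, 0); (-144, 0); (0, 0); (-192, 0); (-256, 0); (0, 0); (0, 0); (0, 0); (0, 0);
     (0, 0); (0, 0); (0, 0); (0, 0); (0, 0); (0, 0); (0, 0); (0, 0); (0, 0); (0, 0)];
  [:: (0, 0); (0, 0); (0, 0); (0, 0); (0, 0); (0, 0); (0, 0); (0, 0); (0, 0); (-6, 0); (0, 0);
     (-6, 0); (0, 0); (0, 0); (0, 0); (0, 0); (-32, 0); (0, 0); (0, 0); (0, 0); (0, 0); (0, 0);
     (0, 0); (0, 0); (27, 0); (0, 0); (0, 0); (0, 0); (0, 0); (0, 0)];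
  [:: (0, 0); (0, 0); (0, 0); (0, 0); (0, 0); (0, 0); (0, 0); (0, 0); (39, 0); (0, 0); (36, 0);
     (0, 0); (48, 0); (0, 0); (64, 0); (0, 0); (0, 0); (0, 0); (0, 0); (0, 0); (0, 0); (0, 0);
     (0, 0); (0, 0); (0, 0); (0, 0); (0, 0); (0, 0); (0, 0); (0, 0)];
  [:: (0, 0); (-7, 0); (0, 0); (36, 0); (0, 0); (144, 0); (0, 0); (320, 0); (0, 0); (0, 0);
     (0, 0); (0, 0); (0, 0); (0, 0); (0, 0); (0, 0); (0, 0); (-48, 0); (0, 0); (-48, 0); (0, 0);
     (0, 0); (0, 0); (-256, 0); (0, 0); (0, 0); (0, 0); (0, 0); (0, 0); (0, 0)];
  [:: (12, 0); (0, 0); (36, 0); (0, 0); (36, 0); (0, 0); (32, 0); (0, 0); (0, 0); (0, 0);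
     (0, 0); (0, 0); (0, 0); (0, 0); (0, 0); (0, 0); (0, 0); (0, 0); (27, 0); (0, 0); (36, 0);
     (0, 0); (48, 0); (0, 0); (0, 0); (0, 0); (0, 0); (0, 0); (0, 0); (0, 0)];
  [:: (0, 0); (0, 0); (0, 0); (0, 0); (0, 0); (0, 0); (0, 0); (0, 0); (-37, 0); (0, 0);
     (-28, 0); (0, 0); (80, 0); (0, 0); (320, 0); (512, 0); (0, 0); (0, 0); (0, 0); (0, 0);
     (0, 0); (0, 0); (0, 0); (0, 0); (0, 0); (-144, 0); (0, 0); (-144, 0); (0, 0); (0, 0)]].

Definition L9'_lines : seq gvec := [::
  ((1, 0), (0, 0), (0, 0)); ((0, 0), (1, 0), (0, 0)); ((0, 0), (0, 0), (1, 0));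
  ((1, 0), (1, 0), (0, 0)); ((1, 0), (0, 0), (1, 0)); ((0, 0), (1, 0), (-1, 0));
  ((1, 0), (1, 0), (0, 1)); ((1, 0), (0, -1), (1, 0)); ((1, 0), (0, -1), (0, 1))].

Definition L9'_points : seq gvec := [::
  ((0, 0), (0, 0), (1, 0)); ((0, 0), (-1, 0), (0, 0)); ((0, 0), (1, 0), (1, 0));
  ((0, 0), (0, -1), (1, 0)); ((1, 0), (0, 0), (0, 0)); ((1, 0), (0, 0), (-1, 0));
  ((0, 1), (0, 0), (-1, 0)); ((-1, 0), (1, 0), (0, 0)); ((0, 1), (1, 0), (0, 0));
  ((1, 0), (-1, 0), (-1, 0)); ((1, 0), (-1, 0), (-1, -1)); ((0, 1), (0, -1), (-1, -1));
  ((-1, 0), (1, -1), (1, 0)); ((0, 1), (1, -1), (0, -1)); ((1, 1), (-1, 0), (-1, 0));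
  ((1, -1), (-1, 0), (-1, 0))].

Definition L9'_syz_a : spoly := [::
  ((1, 0, 4)%nat, (-918, -1374)); ((1, 1, 3)%nat, (2014, 4842)); ((1, 2, 2)%nat, (-646, -7618));
  ((1, 3, 1)%nat, (-870, 5290)); ((1, 4, 0)%nat, (192, -1224)); ((2, 0, 3)%nat, (-1251, 57));
  ((2, 1, 2)%nat, (4492, -244)); ((2, 2, 1)%nat, (-3841, -293)); ((2, 3, 0)%nat, (246, 738));
  ((3, 0, 2)%nat, (144, 312)); ((3, 1, 1)%nat, (594, -558)); ((3, 2, 0)%nat, (-1092, 504));
  ((4, 0, 1)%nat, (171, 63)); ((4, 1, 0)%nat, (-342, -126))].

Definition L9'_syz_b : spoly := [::
  ((0, 1, 4)%nat, (-918, -1374)); ((0, 2, 3)%nat, (-857, 2619)); ((0, 3, 2)%nat, (3152, -4));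
  ((0, 4, 1)%nat, (-1167, -1811)); ((0, 5, 0)%nat, (-96, 612)); ((1, 1, 3)%nat, (-4122, -2166));
  ((1, 2, 2)%nat, (3304, 8252)); ((1, 3, 1)%nat, (2522, -6494)); ((1, 4, 0)%nat, (-1374, 918));
  ((2, 1, 2)%nat, (-4842, 1194)); ((2, 2, 1)%nat, (6057, -99)); ((2, 3, 0)%nat, (-1056, -648));
  ((3, 1, 1)%nat, (-1026, -378)); ((3, 2, 0)%nat, (1026, 378))].

Definition L9'_syz_c : spoly := [::
  ((0, 0, 5)%nat, (459, 687)); ((0, 1, 4)%nat, (178, -2826)); ((0, 2, 3)%nat, (-3103, 2741));
  ((0, 3, 2)%nat, (2388, 664)); ((0, 4, 1)%nat, (192, -1224)); ((1, 0, 4)%nat, (2250, 570));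
  ((1, 1, 3)%nat, (-5138, -5734)); ((1, 2, 2)%nat, (-286, 9562));
  ((1, 3, 1)%nat, (3504, -3888)); ((2, 0, 3)%nat, (2097, -1299));
  ((2, 1, 2)%nat, (-6858, 1746)); ((2, 2, 1)%nat, (4920, 0))].

Definition L9'_dual_support : seq mono := [::
  (0, 2, 10)%nat; (0, 3, 9)%nat; (0, 4, 8)%nat; (0, 5, 7)%nat; (0, 6, 6)%nat; (1, 1, 10)%nat;
  (1, 2, 9)%nat; (1, 3, 8)%nat; (1, 4, 7)%nat; (1, 5, 6)%nat; (1, 6, 5)%nat; (1, 7, 4)%nat;
  (1, 8, 3)%nat; (2, 1, 9)%nat; (2, 2, 8)%nat; (2, 3, 7)%nat; (2, 4, 6)%nat; (2, 5, 5)%nat;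
  (2, 6, 4)%nat; (2, 7, 3)%nat; (3, 0, 9)%nat; (3, 1, 8)%nat; (3, 2, 7)%nat; (3, 3, 6)%nat;
  (3, 4, 5)%nat; (3, 5, 4)%nat; (3, 6, 3)%nat; (3, 7, 2)%nat; (3, 8, 1)%nat; (3, 9, 0)%nat;
  (4, 0, 8)%nat; (4, 1, 7)%nat; (4, 2, 6)%nat; (4, 3, 5)%nat; (4, 4, 4)%nat; (4, 5, 3)%nat;
  (4, 6, 2)%nat; (4, 7, 1)%nat; (4, 8, 0)%nat; (5, 0, 7)%nat; (5, 1, 6)%nat; (5, 2, 5)%nat;
  (5, 3, 4)%nat; (5, 4, 3)%nat; (5, 5, 2)%nat].

Definition L9'_dual_rows : seq (seq gauss) := [::
  [:: (1, 0); (0, 0); (0, 0); (0, 0); (0, 0); (0, 0); (0, 0); (0, 0); (0, 0); (0, 0); (0, 0);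
     (0, 0); (0, 0); (0, 0); (0, 0); (0, 0); (0, 0); (0, 0); (0, 0); (0, 0); (0, 0); (0, 0);
     (0, 0); (0, 0); (0, 0); (0, 0); (0, 0); (0, 0); (0, 0); (0, 0); (0, 0); (0, 0); (0, 0);
     (0, 0); (0, 0); (0, 0); (0, 0); (0, 0); (0, 0); (0, 0); (0, 0); (0, 0); (0, 0); (0, 0);
     (0, 0)];
  [:: (2, 2); (1, 0); (0, 0); (0, 0); (0, 0); (0, 0); (0, 0); (0, 0); (0, 0); (0, 0); (0, 0);
     (0, 0); (0, 0); (0, 0); (0, 0); (0, 0); (0, 0); (0, 0); (0, 0); (0, 0); (0, 0); (0, 0);
     (0, 0); (0, 0); (0, 0); (0, 0); (0, 0); (0, 0); (0, 0); (0, 0); (0, 0); (0, 0); (0, 0);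
     (0, 0); (0, 0); (0, 0); (0, 0); (0, 0); (0, 0); (0, 0); (0, 0); (0, 0); (0, 0); (0, 0);
     (0, 0)];
  [:: (0, 4); (2, 2); (1, 0); (0, 0); (0, 0); (0, 0); (0, 0); (0, 0); (0, 0); (0, 0); (0, 0);
     (0, 0); (0, 0); (0, 0); (0, 0); (0, 0); (0, 0); (0, 0); (0, 0); (0, 0); (0, 0); (0, 0);
     (0, 0); (0, 0); (0, 0); (0, 0); (0, 0); (0, 0); (0, 0); (0, 0); (0, 0); (0, 0); (0, 0);
     (0, 0); (0, 0); (0, 0); (0, 0); (0, 0); (0, 0); (0, 0); (0, 0); (0, 0); (0, 0); (0, 0);
     (0, 0)];
  [:: (-2, 2); (0, 4); (2, 2); (1, 0); (0, 0); (0, 0); (0, 0); (0, 0); (0, 0); (0, 0); (0, 0);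
     (0, 0); (0, 0); (0, 0); (0, 0); (0, 0); (0, 0); (0, 0); (0, 0); (0, 0); (0, 0); (0, 0);
     (0, 0); (0, 0); (0, 0); (0, 0); (0, 0); (0, 0); (0, 0); (0, 0); (0, 0); (0, 0); (0, 0);
     (0, 0); (0, 0); (0, 0); (0, 0); (0, 0); (0, 0); (0, 0); (0, 0); (0, 0); (0, 0); (0, 0);
     (0, 0)];
  [:: (1, 0); (-2, 2); (0, 4); (2, 2); (1, 0); (0, 0); (0, 0); (0, 0); (0, 0); (0, 0); (0, 0);
     (0, 0); (0, 0); (0, 0); (0, 0); (0, 0); (0, 0); (0, 0); (0, 0); (0, 0); (0, 0); (0, 0);
     (0, 0); (0, 0); (0, 0); (0, 0); (0, 0); (0, 0); (0, 0); (0, 0); (0, 0); (0, 0); (0, 0);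
     (0, 0); (0, 0); (0, 0); (0, 0); (0, 0); (0, 0); (0, 0); (0, 0); (0, 0); (0, 0); (0, 0);
     (0, 0)];
  [:: (484792, 38736); (198172, 15816); (127524, 139632); (149508, 78864); (64860, -5040);
     (27752, -11704); (62488, -54216); (31023, -98421); (-3687, -59361); (21684, -20928);
     (39972, -32664); (15819, -36693); (-1995, -10545); (24928, -20736); (-3936, -7488);
     (-10320, 8160); (-1680, 9240); (-1392, -1776); (-10800, -4200); (-10032, 2304);
     (-43316, 312); (-13956, -1848); (-6252, -7536); (-4860, -8400); (-4644, -8232);
     (-5316, -7848); (-6828, -5904); (-6780, -1680); (-3300, -2520); (-22452, -20136);
     (11232, 3396); (2976, 1668); (576, 3228); (672, 3516); (768, 3684); (1824, 3612);
     (2400, 1500); (192, 36); (5280, 2820); (-1392, -576); (-240, -480); (0, -480); (336, -672);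
     (96, -1152); (-528, -864)];
  [:: (1683840, 12872); (578208, -38652); (368312, 382668); (434968, 188044); (168648, -35084);
     (183480, -23608); (333448, -223816); (96717, -376173); (-87579, -158535); (36712, 11388);
     (120784, -68900); (17701, -111609); (-37043, -26611); (-22464, -104160); (-75136, -61088);
     (-47552, 3376); (24216, -7168); (27056, -73200); (-30632, -78304); (-39136, -22064);
     (-106768, 26628); (480, 21684); (-20488, -7188); (-40840, -5060); (-49488, 5620);
     (-49104, 17556); (-40552, 24108); (-25864, 18172); (-16704, -17708); (-104496, -36284);
     (27060, 1992); (-5388, -8280); (10668, 7512); (22284, 1560); (22932, -6168);
     (20460, -12456); (9900, -14280); (1236, 3144); (29172, -1656); (480, 48); (960, 2160);
     (-3552, -1344); (-5760, 816); (-4800, 2976); (-2688, 3216)];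
  [:: (-1064384, -1021384); (-405312, -348580); (-46680, -480652); (-195064, -369452);
     (-134248, -68596); (-146104, -103304); (-356744, -61112); (-289973, 187525);
     (-35517, 160287); (-13320, -25692); (-119088, -24892); (-80429, 66225); (6843, 43691);
     (-50112, 91872); (9088, 87584); (26752, 24944); (-27416, -11072); (-67952, 31152);
     (-31448, 69664); (10400, 38096); (89040, 43468); (14112, -18788); (10312, 17860);
     (26440, 30900); (39696, 28764); (46416, 19900); (44008, 10180); (29704, 4788);
     (384, 22908); (49840, 88716); (-17844, -15624); (-2484, 10104); (-3180, -11928);
     (-14988, -15672); (-20628, -10920); (-23148, -4728); (-16620, 3720); (1260, -2856);
     (-21492, -16584); (-96, -816); (960, -2160); (1632, 3264); (4608, 3408); (5568, 1248);
     (4224, -528)];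
  [:: (-379976, 871664); (-118788, 312280); (-304700, 92192); (-228476, 180672);
     (-34692, 103776); (-10936, 83624); (61304, 197592); (174163, 128775); (100797, 9043);
     (-6540, 40432); (14788, 95832); (54319, 48695); (21017, -5101); (31072, 23808);
     (28192, -21184); (528, -28384); (-3504, 792); (26512, 10128); (37168, -14824);
     (12720, -22336); (18300, -62328); (3948, -7272); (12228, -5760); (10740, -11040);
     (6924, -13464); (3564, -14040); (1092, -13920); (-204, -11808); (9996, -5448);
     (44540, -35736); (-10416, 14244); (-336, -924); (-5040, 1788); (-3312, 5532); (-912, 5700);
     (528, 5628); (2160, 3900); (-1200, 516); (-4848, 11364); (1296, -384); (-240, 480);
     (768, -864); (-48, -1248); (-288, -768); (-144, -672)];
  [:: (3364440, -1028672); (1217852, -391248); (1100948, 637672); (1138772, 159496);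
     (389772, -189576); (272280, -139752); (400152, -590824); (-51407, -776487);
     (-230101, -329975); (82628, -105608); (185396, -273520); (-17411, -260191);
     (-66537, -44319); (-4256, -189760); (-110144, -51552); (-66448, 63584); (30304, 25368);
     (1584, -79760); (-92448, -67336); (-75184, 10304); (-226212, 98112); (-40020, 28336);
     (-55212, -23192); (-71100, -18200); (-75412, -4160); (-73716, 10624); (-66028, 24712);
     (-46076, 29928); (-34356, -18352); (-228644, -42016); (65800, -6252); (3368, -3820);
     (19672, 15948); (30616, 6380); (29288, -1292); (28760, -8884); (16120, -16180);
     (2184, 3316); (52808, -9004); (-5040, -608); (400, 640); (-4928, -2016); (-5680, 64);
     (-5280, 704); (-4752, 1984)];
  [:: (-50176, -1052712); (-30252, -360544); (274844, -260472); (131180, -321480);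
     (-30036, -126752); (-12936, -95432); (-132500, -172500); (-229573, -43641);
     (-109271, 55663); (-13916, -19072); (-57224, -65748); (-71769, -6393); (-14619, 20207);
     (-65056, -5632); (-31720, 33080); (11224, 23688); (8608, -15544); (-29936, -18192);
     (-36616, 15168); (-8392, 21416); (14484, 80368); (13588, 8736); (-9188, 14344);
     (-10660, 24680); (-5052, 29936); (2356, 30672); (8668, 26536); (9308, 16616);
     (-10012, 7776); (-23132, 70256); (1864, -21252); (-4712, 76); (6456, -5628);
     (4616, -12268); (552, -13476); (-3512, -13004); (-6440, -7100); (1912, 44); (-504, -17988);
     (176, 992); (880, 0); (-1216, 1888); (-528, 2944); (352, 2944); (1040, 2240)];
  [:: (-3001640, 867264); (-1146084, 381616); (-1010796, -500824); (-1008524, -93432);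
     (-335924, 183032); (-190120, 108184); (-338664, 454808); (20129, 653289); (200987, 300185);
     (-40796, 88376); (-143212, 206160); (4557, 199537); (43559, 34353); (-12448, 184640);
     (88128, 62624); (55696, -48608); (-34848, -23656); (-15888, 72880); (72416, 68472);
     (65648, -3328); (217004, -113184); (39420, -36592); (52804, 15944); (67700, 13640);
     (71484, 1760); (69852, -11168); (62276, -24024); (43252, -29176); (30492, 12784);
     (186668, 21312); (-66520, 14164); (-5336, 7060); (-19144, -13236); (-29032, -5460);
     (-27896, 1204); (-27560, 7948); (-16040, 15180); (-2168, -1292); (-39576, 10388);
     (5200, -864); (400, -640); (4416, 1952); (5200, 832); (5600, 192); (5104, -1728)];
  [:: (354312, -1733280); (163748, -602048); (625268, -326432); (393724, -499368);
     (15676, -240528); (-33768, -148520); (-194656, -290848); (-357153, -145597);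
     (-197895, 18679); (-37492, -71032); (-89980, -145064); (-119789, -47381); (-28931, 19103);
     (-55680, -56416); (-34128, 29136); (20456, 42632); (26032, -5416); (-25520, -17296);
     (-43744, 25192); (-9624, 35336); (-32832, 153668); (-6896, 29700); (-28368, 19348);
     (-29600, 26180); (-24880, 31588); (-17264, 34644); (-7952, 34452); (1152, 26564);
     (-15728, 8884); (-74144, 98196); (28952, -43540); (1200, -4332); (13112, -4508);
     (12480, -11684); (8792, -13332); (5024, -15140); (-2120, -11260); (2064, 564);
     (8024, -26452); (-6192, 3200); (80, 480); (-2304, 1632); (-2064, 2240); (-1984, 2720);
     (-784, 3168)];
  [:: (-1181304, -54208); (-522668, 9904); (-306924, -291728); (-349780, -179480);
     (-155204, 12032); (-66664, 51192); (-127200, 157600); (-50597, 252071); (25941, 157267);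
     (-37284, 72472); (-72556, 104328); (-7521, 101183); (22409, 22763); (-61824, 55392);
     (7600, 19600); (21496, -23928); (-3888, -31976); (-11664, -3888); (10816, 9832);
     (17272, -1976); (142376, 4932); (34872, -6876); (18568, 21076); (22040, 27140);
     (26232, 24804); (28984, 18868); (28712, 10164); (22232, -796); (7992, 4724);
     (73032, 49524); (-46664, -12628); (-5888, 2004); (-3496, -12732); (-9616, -12932);
     (-10952, -9684); (-12208, -6596); (-9000, -220); (608, 116); (-18696, -5012); (6224, 3008);
     (80, -480); (576, 3232); (1968, 2816); (2048, 2336); (2480, 1760)];
  [:: (-6848456, -522848); (-2328596, -386688); (-1313132, -2450136); (-1979804, -1563592);
     (-949140, -83240); (-631176, 334072); (-981464, 1185128); (-307119, 1607513);
     (126331, 747033); (-421932, 179944); (-642156, 494992); (-132627, 550609);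
     (124375, 101505); (-206944, 71168); (168928, -15296); (219680, -168720); (60960, -108200);
     (60976, 104048); (201920, 131800); (168896, 848); (717988, 233784); (89908, 118664);
     (37356, 155728); (50140, 124400); (69812, 90296); (91028, 52824); (101804, 16432);
     (87900, -13840); (48020, 46280); (419556, 277048); (-174696, -203708); (19752, -33964);
     (17192, -67204); (-15496, -53108); (-28104, -33692); (-40712, -15636); (-31480, 7740);
     (1544, -5388); (-110120, -19580); (-2224, 43808); (-11120, 0); (-8000, 10400);
     (-1008, 9856); (3232, 9856); (10224, 5952)];
  [:: (-2, 0); (0, 0); (0, 0); (0, 0); (0, 0); (1, 0); (0, 0); (0, 0); (0, 0); (0, 0); (0, 0);
     (0, 0); (0, 0); (0, 0); (0, 0); (0, 0); (0, 0); (0, 0); (0, 0); (0, 0); (0, 0); (0, 0);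
     (0, 0); (0, 0); (0, 0); (0, 0); (0, 0); (0, 0); (0, 0); (0, 0); (0, 0); (0, 0); (0, 0);
     (0, 0); (0, 0); (0, 0); (0, 0); (0, 0); (0, 0); (0, 0); (0, 0); (0, 0); (0, 0); (0, 0);
     (0, 0)];
  [:: (484792, 27216); (192412, 15816); (127524, 139632); (149508, 78864); (64860, -5040);
     (30632, -8824); (65368, -54216); (31023, -98421); (-3687, -59361); (21684, -20928);
     (39972, -32664); (15819, -36693); (-1995, -10545); (22048, -20736); (-3936, -7488);
     (-10320, 8160); (-1680, 9240); (-1392, -1776); (-10800, -4200); (-10032, 2304);
     (-37556, 312); (-13956, -1848); (-6252, -7536); (-4860, -8400); (-4644, -8232);
     (-5316, -7848); (-6828, -5904); (-6780, -1680); (-3300, -2520); (-22452, -20136);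
     (11232, 3396); (2976, 1668); (576, 3228); (672, 3516); (768, 3684); (1824, 3612);
     (2400, 1500); (192, 36); (5280, 2820); (-1392, -576); (-240, -480); (0, -480); (336, -672);
     (96, -1152); (-528, -864)];
  [:: (-2929368, -1619456); (-1094556, -630192); (-325268, -1181256); (-636340, -868360);
     (-374028, -143896); (-281688, -38936); (-661720, 176680); (-477129, 555327);
     (-81603, 340479); (-158308, -12216); (-328852, 42416); (-172597, 167031); (9713, 62311);
     (-112608, 87744); (55360, 90080); (97712, 3584); (8544, -17432); (-30128, 76944);
     (45152, 119944); (72784, 45728); (224692, 91344); (34404, 27168); (16156, 49992);
     (29740, 45320); (37284, 33488); (40068, 23376); (42844, 15528); (40684, 7688);
     (17604, 35648); (110004, 161648); (-50568, -45876); (1464, -5652); (-2712, -18924);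
     (-13752, -14124); (-14184, -7188); (-15096, -3852); (-12600, 2580); (-1704, -3828);
     (-36552, -22644); (1968, 5856); (-1680, 0); (2112, 2784); (2736, 192); (1056, 192);
     (1680, 960)];
  [:: (234284, 596020); (85866, 221134); (-94494, 208126); (-10862, 200654); (37222, 64234);
     (39304, 42560); (121868, 59444); (140489, -22054); (52860, -41757); (18666, 20166);
     (51210, 34102); (45047, -3972); (6018, -11459); (26640, -3312); (3464, -22808);
     (-12688, -13376); (-1036, 1988); (17360, -7392); (11132, -23956); (-3728, -16448);
     (-22134, -40114); (-1782, -5650); (3194, -9034); (-190, -11010); (-3390, -10314);
     (-5358, -8842); (-6454, -7546); (-6046, -5922); (2154, -7842); (2042, -37938);
     (1914, 12330); (-630, -294); (-1626, 3414); (1110, 4422); (2394, 3306); (3078, 2550);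
     (3030, 870); (-342, 858); (3258, 8106); (456, -840); (120, 360); (-48, -816); (-648, -600);
     (-528, -240); (-408, -264)];
  [:: (364616, -833264); (153348, -316120); (312380, -134432); (207356, -203712);
     (23172, -103776); (6136, -79784); (-57464, -186072); (-163603, -125895); (-97917, -12883);
     (3660, -38512); (-12868, -90072); (-49519, -47735); (-20057, 3181); (-29152, -23808);
     (-26272, 19264); (-528, 26464); (3504, -792); (-24592, -10128); (-35248, 12904);
     (-12720, 20416); (-18300, 62328); (-3948, 7272); (-12228, 5760); (-10740, 11040);
     (-6924, 13464); (-3564, 14040); (-1092, 13920); (204, 11808); (-9996, 5448);
     (-40700, 35736); (10416, -14244); (336, 924); (5040, -1788); (3312, -5532); (912, -5700);
     (-528, -5628); (-2160, -3900); (1200, -516); (4848, -11364); (-1296, 384); (240, -480);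
     (-768, 864); (48, 1248); (288, 768); (144, 672)];
  [:: (2, -2); (0, 0); (0, 0); (0, 0); (0, 0); (-1, 1); (0, 0); (0, 0); (0, 0); (0, 0); (0, 0);
     (0, 0); (0, 0); (0, 0); (0, 0); (0, 0); (0, 0); (0, 0); (0, 0); (0, 0); (1, 0); (0, 0);
     (0, 0); (0, 0); (0, 0); (0, 0); (0, 0); (0, 0); (0, 0); (0, 0); (0, 0); (0, 0); (0, 0);
     (0, 0); (0, 0); (0, 0); (0, 0); (0, 0); (0, 0); (0, 0); (0, 0); (0, 0); (0, 0); (0, 0);
     (0, 0)];
  [:: (-1466304, -1313896); (-499280, -466308); (25288, -654460); (-183752, -542476);
     (-160776, -131652); (-201144, -71496); (-475752, 16744); (-363865, 265593);
     (-68273, 163787); (-74552, -70300); (-192512, -46652); (-112705, 65029); (8631, 35607);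
     (-24448, 53152); (50624, 80352); (63184, 30208); (-4792, 11136); (-41328, 71792);
     (6984, 104608); (37936, 50080); (88728, 73860); (-6168, 6068); (960, 20588);
     (20160, 18620); (30424, 9044); (32280, -556); (28960, -3988); (23168, 636); (8328, 26356);
     (45176, 96100); (-13684, -28056); (7804, 3544); (-2188, -9000); (-13852, -5432);
     (-15380, 1928); (-13628, 6088); (-8140, 7480); (-996, -3400); (-21044, -14168);
     (-2016, 2576); (-1600, -1840); (2144, 1728); (4288, -688); (2688, -2528); (1152, -1744)];
  [:: (-747200, 2329848); (-279888, 824572); (-774032, 330492); (-532088, 516996);
     (-63168, 265364); (33240, 256328); (259232, 499056); (479563, 261873); (227399, -5665);
     (-22792, 118132); (61736, 233580); (138819, 87069); (36543, -29669); (76384, 14080);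
     (62416, -84752); (-88, -79416); (8504, -272); (89744, 11280); (104392, -55776);
     (33256, -64376); (36708, -152968); (7700, -3624); (26228, -14152); (16660, -33800);
     (1668, -40280); (-9436, -38376); (-13228, -34408); (-9356, -29192); (24724, -20952);
     (89636, -108536); (-24100, 34248); (548, -7840); (-10668, 6888); (-2324, 18160);
     (6108, 16968); (10220, 14096); (11060, 7400); (-3196, 2176); (-6372, 32136); (3520, 112);
     (-1120, 2160); (1312, -3136); (-1920, -4336); (-3040, -2176); (-1952, -1136)];
  [:: (1258616, -458736); (429900, -166888); (399228, 244840); (423908, 66864);
     (146804, -67352); (85336, -71656); (125328, -245456); (-41465, -288537); (-84083, -108473);
     (43988, -37280); (72268, -105072); (-7725, -91081); (-22199, -9513); (-2048, -53408);
     (-45936, -7568); (-29176, 27608); (3168, 5416); (-14928, -33328); (-49616, -21672);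
     (-34424, 8920); (-83432, 41220); (-12888, 3268); (-18040, -7292); (-21320, -1100);
     (-19896, 4804); (-17400, 8564); (-15320, 11172); (-12232, 11476); (-15192, -3724);
     (-79304, -7020); (25456, -3196); (104, 1244); (6592, 3660); (8488, -1452); (6320, -3772);
     (5192, -4972); (2240, -5460); (1544, 380); (16176, -5948); (-1936, -864); (560, -320);
     (-1536, -32); (-1072, 992); (-512, 672); (-688, 576)];
  [:: (0, 4); (0, 0); (0, 0); (0, 0); (0, 0); (0, -2); (0, 0); (0, 0); (0, 0); (0, 0); (0, 0);
     (0, 0); (0, 0); (0, 0); (0, 0); (0, 0); (0, 0); (0, 0); (0, 0); (0, 0); (-2, 2); (0, 0);
     (0, 0); (0, 0); (0, 0); (0, 0); (0, 0); (0, 0); (0, 0); (0, 0); (1, 0); (0, 0); (0, 0);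
     (0, 0); (0, 0); (0, 0); (0, 0); (0, 0); (0, 0); (0, 0); (0, 0); (0, 0); (0, 0); (0, 0);
     (0, 0)];
  [:: (-1825488, 477048); (-658600, 141244); (-573424, -377660); (-579824, -110172);
     (-196112, 81276); (-176328, 113128); (-244984, 373208); (22125, 435191); (109689, 145489);
     (-83104, 19220); (-135304, 126916); (-7955, 126643); (31657, 15629); (21504, 67424);
     (82368, 11424); (47168, -32464); (-8024, 10352); (21424, 76304); (80168, 56656);
     (58272, -880); (134136, -47860); (2824, 1116); (23040, 12436); (35200, -4060);
     (33368, -19172); (25720, -27492); (18400, -27756); (14976, -19228); (25096, 10972);
     (107512, 13740); (-37828, -1312); (7068, -1632); (-10396, -5120); (-16284, 6496);
     (-11620, 13056); (-7036, 15136); (-860, 12320); (-3012, -1920); (-25348, 8864);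
     (1728, 2192); (-2080, -240); (3168, -384); (2976, -3376); (896, -3616); (224, -2448)];
  [:: (3428712, 1692880); (1416308, 631592); (505788, 1222448); (764524, 888512);
     (421796, 131632); (314872, 2520); (722424, -228328); (528977, -652187); (88935, -424591);
     (165948, -29872); (354460, -78984); (184101, -206891); (-14501, -78287); (132960, -113856);
     (-57088, -104224); (-106624, 1392); (-6768, 32744); (42480, -70416); (-38704, -124408);
     (-74464, -48304); (-282212, -110592); (-49236, -16560); (-24028, -58792); (-41420, -60200);
     (-52980, -48672); (-59284, -35776); (-62492, -22728); (-56588, -8936); (-22068, -35696);
     (-129444, -187584); (66512, 53260); (3200, 1308); (3952, 25332); (19360, 22916);
     (21872, 14508); (24544, 9380); (20880, -2060); (1504, 3004); (42384, 28748);
     (-4112, -6080); (880, 480); (-2304, -4768); (-3984, -2720); (-3104, -2240); (-3824, -1952)];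
  [:: (-2, -2); (0, 0); (0, 0); (0, 0); (0, 0); (1, 1); (0, 0); (0, 0); (0, 0); (0, 0); (0, 0);
     (0, 0); (0, 0); (0, 0); (0, 0); (0, 0); (0, 0); (0, 0); (0, 0); (0, 0); (0, -4); (0, 0);
     (0, 0); (0, 0); (0, 0); (0, 0); (0, 0); (0, 0); (0, 0); (0, 0); (-2, 2); (0, 0); (0, 0);
     (0, 0); (0, 0); (0, 0); (0, 0); (0, 0); (0, 0); (1, 0); (0, 0); (0, 0); (0, 0); (0, 0);
     (0, 0)];
  [:: (347816, 815840); (115844, 319296); (-139876, 355224); (13292, 336616); (76068, 102056);
     (47976, 55400); (143192, 60376); (178851, -48341); (76625, -71493); (40764, 8504);
     (82140, 22928); (63543, -22573); (6437, -18381); (68320, 5632); (18656, -17152);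
     (-15872, -4944); (-8544, 16712); (15440, 7312); (11968, -16504); (-4832, -14192);
     (-67876, -71496); (-16948, -17240); (4116, -21856); (5540, -25280); (2380, -25736);
     (-2132, -24168); (-5996, -20224); (-6684, -12608); (6316, -9368); (348, -65992);
     (17736, 30860); (1560, 3484); (-6344, 9076); (-3320, 11588); (-984, 10604); (1352, 10020);
     (3160, 5940); (-1928, 1212); (4232, 14924); (-1616, -5600); (560, 0); (2048, -2144);
     (1008, -2560); (608, -2560); (-432, -2496)];
  [:: (21304, 3976); (5710, 2178); (2602, 9170); (5902, 6146); (3106, 602); (2284, -444);
     (3962, -3074); (1720, -4843); (-197, -2212); (1322, -110); (2212, -1028); (690, -1469);
     (-271, -282); (368, -192); (-724, -52); (-824, 452); (-188, 284); (-112, -472);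
     (-624, -608); (-576, -100); (-1818, -820); (-22, -448); (10, -508); (-90, -380);
     (-174, -264); (-250, -144); (-290, -32); (-238, 44); (-98, -196); (-1246, -920);
     (294, 646); (-174, 126); (-102, 210); (22, 162); (70, 102); (118, 42); (90, -30);
     (-14, 30); (334, 78); (76, -116); (60, 0); (36, -28); (12, -32); (-8, -32); (-32, -16)];
  [:: (-494392, -32976); (-196252, -15816); (-127524, -139632); (-149508, -78864);
     (-64860, 5040); (-26792, 12664); (-63448, 54216); (-31023, 98421); (3687, 59361);
     (-21684, 20928); (-39972, 32664); (-15819, 36693); (1995, 10545); (-23008, 20736);
     (3936, 7488); (10320, -8160); (1680, -9240); (1392, 1776); (10800, 4200); (10032, -2304);
     (39476, -312); (13956, 1848); (6252, 7536); (4860, 8400); (4644, 8232); (5316, 7848);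
     (6828, 5904); (6780, 1680); (3300, 2520); (22452, 20136); (-11232, -3396); (-2976, -1668);
     (-576, -3228); (-672, -3516); (-768, -3684); (-1824, -3612); (-2400, -1500); (-192, -36);
     (-5280, -2820); (1392, 576); (240, 480); (0, 480); (-336, 672); (-96, 1152); (528, 864)];
  [:: (214188, 261244); (85578, 108114); (-7094, 133338); (34442, 113786); (34590, 29870);
     (18048, 10984); (57572, 7036); (64302, -31779); (28017, -30924); (20786, 258);
     (35498, 4034); (26036, -9837); (4415, -6110); (22032, 1776); (2536, -5272); (-8800, -1120);
     (-5460, 3940); (352, -1104); (-2860, -7220); (-5888, -3904); (-19454, -19302);
     (-5934, -8022); (682, -7014); (1810, -6670); (1914, -6478); (1386, -6702); (-422, -6486);
     (-2510, -4270); (-270, -2950); (-1038, -21094); (3918, 7314); (654, 2322); (-1326, 1902);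
     (-1422, 2094); (-1458, 2226); (-894, 2718); (450, 1950); (78, 114); (1230, 4050);
     (-408, -984); (120, -360); (240, -240); (504, -168); (624, -528); (168, -696)];
  [:: (-346840, -2625536); (-121404, -1019504); (606444, -787784); (260716, -843592);
     (-87884, -321368); (-95000, -166936); (-390424, -302872); (-561001, -48481);
     (-276963, 92415); (-96516, -103224); (-194292, -185360); (-194293, -40233);
     (-41871, 26983); (-112608, -66240); (-29632, 53344); (49616, 56512); (31712, 104);
     (-38128, 16080); (-35104, 77192); (13168, 61792); (44484, 196016); (-2700, 52928);
     (-29236, 36584); (-25060, 35880); (-18636, 33840); (-13548, 33392); (-5044, 35336);
     (6812, 31464); (-12588, 24864); (-63292, 141072); (6360, -58356); (6264, -8340);
     (12936, -8556); (8328, -10860); (6264, -8916); (4680, -10572); (-1560, -8940);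
     (792, -2292); (1944, -32052); (-2640, 5856); (-1680, 0); (-1344, 1632); (-720, 192);
     (-2400, 192); (-1776, 2112)];
  [:: (-359816, 805424); (-147588, 295000); (-310460, 115232); (-211196, 192192);
     (-26052, 100896); (-2296, 77864); (59864, 175992); (158323, 117255); (93597, 11923);
     (-780, 37552); (16228, 82872); (47119, 40055); (16697, -5101); (28192, 23808);
     (25312, -18304); (528, -25504); (-3504, 792); (23632, 10128); (34288, -11944);
     (12720, -19456); (18300, -62328); (3948, -7272); (12228, -5760); (10740, -11040);
     (6924, -13464); (3564, -14040); (1092, -13920); (-204, -11808); (9996, -5448);
     (38780, -35736); (-10416, 14244); (-336, -924); (-5040, 1788); (-3312, 5532); (-912, 5700);
     (528, 5628); (2160, 3900); (-1200, 516); (-4848, 11364); (1296, -384); (-240, 480);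
     (768, -864); (-48, -1248); (-288, -768); (-144, -672)];
  [:: (-2, 0); (4, -4); (0, -8); (-4, -4); (-2, 0); (0, 0); (1, 0); (1, -1); (0, -1); (0, 0);
     (1, 0); (1, -1); (0, -1); (0, 0); (0, 0); (0, 0); (0, 0); (0, 0); (0, 0); (0, 0); (0, 0);
     (0, 0); (0, 0); (0, 0); (0, 0); (0, 0); (0, 0); (0, 0); (0, 0); (0, 0); (0, 0); (0, 0);
     (0, 0); (0, 0); (0, 0); (0, 0); (0, 0); (0, 0); (0, 0); (0, 0); (0, 0); (0, 0); (0, 0);
     (0, 0); (0, 0)];
  [:: (-570120, 612176); (-226436, 233784); (-321284, -3256); (-273356, 99152); (-68076, 88488);
     (-23880, 54936); (8304, 154192); (102911, 149871); (81253, 55535); (-1724, 50624);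
     (-2468, 89680); (32123, 58783); (15921, 5727); (2048, 46240); (15632, -3024);
     (1624, -24872); (-8032, -11544); (8208, 1520); (21744, -9512); (10072, -16232);
     (47616, -49836); (16080, -11788); (15936, 1076); (15120, 1700); (13936, 980);
     (13488, -412); (12544, -3916); (8048, -7644); (7248, -1724); (51872, -10172);
     (-16960, 9636); (-4184, 700); (-4816, -2484); (-4888, -1580); (-4544, -1564);
     (-5240, -428); (-3280, 1900); (-312, 92); (-9344, 5092); (2160, -736); (560, 320);
     (704, 288); (400, 608); (960, 928); (1296, 128)];
  [:: (377728, -424728); (197760, -132524); (248224, 44580); (223624, -24948); (74352, -50356);
     (-37752, -58888); (-87376, -108768); (-84935, -85581); (-20299, -57019); (23864, -81380);
     (6584, -90636); (-10095, -47913); (2253, -5639); (48736, 256); (19792, 29296);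
     (3512, 32904); (-13816, 28528); (-27184, 34896); (-21608, 42144); (-5192, 28360);
     (-45876, 14000); (-33124, -9456); (-9700, -10336); (4060, -11840); (10092, -16448);
     (8780, -21168); (1820, -18784); (-3236, -5792); (-2276, 7488); (-24052, -7520);
     (16868, -168); (9692, 6992); (-1524, 3000); (-7436, 5344); (-8220, 9624); (-4684, 12224);
     (620, 8120); (-388, -2000); (1188, 1176); (-3968, -752); (-1120, -2160); (1312, -256);
     (3264, -1744); (2144, -3904); (-224, -3152)];
  [:: (-693376, 340968); (-228432, 81476); (-201576, -169412); (-224920, -81780);
     (-89176, 13828); (-23816, 102728); (-9240, 210520); (59857, 159519); (14809, 37453);
     (-75496, 32668); (-59744, 77052); (-39, 43667); (5521, -8703); (-896, -32672);
     (31680, -38240); (28784, -29632); (28728, -704); (52464, 13328); (61624, -5472);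
     (31888, -17504); (41704, -2052); (4248, 26956); (1472, 8404); (-5120, -6140);
     (-13272, -10964); (-18264, -8788); (-15392, -4524); (-4672, -3644); (11448, -4084);
     (29128, -1764); (-12236, -6472); (2948, -10744); (76, 1032); (4636, 7512); (9812, 7064);
     (11708, 3416); (7820, -600); (-1948, 1064); (-3084, 5752); (1376, 3312); (-1600, 1840);
     (-96, -1472); (-2368, -2896); (-3968, -1056); (-2560, 720)];
  [:: (2, 2); (-8, 0); (-8, 8); (0, 8); (2, 2); (0, 0); (-1, -1); (-2, 0); (-1, 1); (0, 0);
     (-1, -1); (-2, 0); (-1, 1); (0, 0); (0, 0); (0, 0); (0, 0); (0, 0); (0, 0); (0, 0); (0, 0);
     (0, 0); (0, 0); (0, 0); (0, 0); (0, 0); (0, 0); (0, 0); (0, 0); (-1, 0); (0, 0); (0, 0);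
     (0, 0); (0, 0); (0, 0); (0, 0); (0, 0); (0, 0); (0, 0); (0, 0); (0, 0); (0, 0); (0, 0);
     (0, 0); (0, 0)];
  [:: (-393624, 3270192); (-160268, 1197464); (-1021604, 709952); (-618100, 944400);
     (1796, 430752); (66456, 241592); (383320, 497080); (675213, 225001); (373251, -44803);
     (92956, 138592); (192604, 268808); (235649, 88073); (60119, -32147); (126816, 102592);
     (57600, -55200); (-43904, -78608); (-46288, -536); (42416, 8752); (63856, -64888);
     (4512, -69296); (1116, -251888); (8492, -59616); (48708, -37624); (48980, -42680);
     (41932, -47056); (32684, -51312); (18692, -54936); (-108, -47096); (23372, -20896);
     (131612, -173616); (-23744, 71212); (-4368, 9084); (-22016, 7508); (-19536, 15908);
     (-15392, 16716); (-11408, 20804); (800, 17620); (-2352, 156); (-14336, 44908);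
     (4464, -6272); (880, -480); (3456, -2208); (2928, -2144); (3808, -2624); (2320, -4320)];
  [:: (-41040, -256888); (-20072, -148892); (49152, -73892); (56768, -67556); (13888, -40924);
     (-52120, 19512); (-75432, 36424); (-52793, 18557); (-34269, -24605); (-46608, -49172);
     (-54376, -36900); (-35529, -14719); (-7453, -3481); (24576, -40800); (25024, -13088);
     (15808, 7536); (11736, 26992); (21456, 36720); (28888, 26896); (18784, 9616);
     (-8968, 28548); (-21720, 22644); (-9008, 1852); (-5680, -12820); (-9768, -19980);
     (-15944, -19724); (-17872, -11652); (-8944, -148); (6696, 3572); (-24456, 996);
     (8740, -10288); (9412, -5520); (1148, 3792); (1724, 10000); (5572, 11952); (9500, 9424);
     (7740, 2480); (-2524, -496); (4452, 784); (-2560, 2288); (-2080, 240); (288, -1664);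
     (-480, -3664); (-2560, -3424); (-2848, -1264)];
  [:: (0, -4); (8, 8); (16, 0); (8, -8); (0, -4); (0, 0); (0, 2); (2, 2); (2, 0); (0, 0);
     (0, 2); (2, 2); (2, 0); (0, 0); (0, 0); (0, 0); (0, 0); (0, 0); (0, 0); (0, 0); (0, 0);
     (0, 0); (0, 0); (0, 0); (0, 0); (0, 0); (0, 0); (0, 0); (0, 0); (2, 2); (0, 0); (0, 0);
     (0, 0); (0, 0); (0, 0); (0, 0); (0, 0); (0, 0); (-1, 0); (0, 0); (0, 0); (0, 0); (0, 0);
     (0, 0); (0, 0)];
  [:: (256936, 178432); (91972, 66768); (6844, 120264); (48076, 100184); (36612, 21880);
     (27336, 1864); (58936, -17416); (46599, -51097); (11509, -33969); (17052, -2072);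
     (31836, -6848); (15675, -18209); (-2327, -6441); (13664, -2560); (-2720, -5504);
     (-9280, 1200); (-2688, 4552); (2512, -2800); (-2272, -8312); (-5344, -3760);
     (-23396, -20088); (-4340, -4744); (-588, -6704); (-1340, -6928); (-2548, -6328);
     (-3796, -5208); (-4684, -3728); (-4476, -1744); (-724, -2824); (-10788, -20024);
     (3864, 9196); (168, 956); (-664, 2708); (632, 2980); (1272, 2380); (1912, 1860);
     (1928, 468); (-184, 156); (3928, 3244); (368, -1120); (112, 0); (64, -544); (-144, -512);
     (-224, -512); (-432, -384)];
  [:: (-2376, -2832); (-868, -1288); (76, -1288); (-220, -1040); (-252, -296); (-472, -120);
     (-960, 48); (-793, 431); (-283, 263); (-268, -144); (-468, -96); (-301, 143); (-15, 103);
     (0, 0); (112, 112); (152, 72); (64, 40); (0, 112); (48, 152); (72, 72); (-24, 292);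
     (-24, 52); (-40, 36); (-24, 36); (-8, 36); (8, 36); (24, 36); (40, 36); (24, 52);
     (24, 228); (64, -76); (8, -4); (16, -4); (8, -12); (0, -12); (-8, -12); (-16, -4);
     (-8, -4); (-32, -44); (-16, 0); (0, 0); (0, 0); (0, 0); (0, 0); (0, 0)];
  [:: (96048, -51256); (31728, -16436); (34336, 22428); (38312, 6276); (13600, -6140);
     (5448, -9816); (3352, -24184); (-9193, -24059); (-7893, -8749); (4136, -5772);
     (4288, -11916); (-3089, -8287); (-2605, -65); (1472, -2304); (-2784, 1728); (-2040, 4120);
     (-200, 2000); (-1808, -864); (-3880, -80); (-2328, 1416); (-11164, 2648); (-1404, -792);
     (-1308, -1704); (-1420, -1160); (-1516, -568); (-1564, 88); (-1452, 664); (-1020, 1000);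
     (-940, -120); (-8108, -264); (3548, 1144); (-396, 432); (84, 952); (508, 544); (572, 216);
     (636, -112); (340, -360); (-12, 64); (1660, -680); (-208, -464); (240, 0); (80, -160);
     (-16, -128); (-96, -128); (-192, -16)]].
End Certificates.

Definition L9_dual : seq spoly := [seq zip L9_dual_support w | w <- L9_dual_rows].
Definition L9'_dual : seq spoly := [seq zip L9'_dual_support w | w <- L9'_dual_rows].

Lemma L9_points_distinct : distinct_points L9_points. Proof. by vm_compute. Qed.
Lemma L9'_points_distinct : distinct_points L9'_points. Proof. by vm_compute. Qed.
Lemma L9_lines_meet : lines_meeting_in L9_lines L9_points. Proof. by vm_compute. Qed.
Lemma L9'_lines_meet : lines_meeting_in L9'_lines L9'_points. Proof. by vm_compute. Qed.

Lemma L9_L9'_mult_perm :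
  perm_eq (map (gmult L9_lines) L9_points) (map (gmult L9'_lines) L9'_points).
Proof. by vm_compute. Qed.

Lemma L9_syzygy4 : syzygy_cert L9_lines 4 L9_syz_a L9_syz_b L9_syz_c.
Proof. by vm_compute. Qed.
Lemma L9'_syzygy5 : syzygy_cert L9'_lines 5 L9'_syz_a L9'_syz_b L9'_syz_c.
Proof. by vm_compute. Qed.

Lemma L9_no_syzygy3 : separates L9_dual (jac_shifts L9_lines 3).
Proof. by vm_compute. Qed.
Lemma L9'_no_syzygy4 : separates L9'_dual (jac_shifts L9'_lines 4).
Proof. by vm_compute. Qed.

Lemma L9_gval3 e : L9 = map (gval3 e) L9_lines.
Proof. by rewrite /gval3 /gval /= !mul0r !addr0. Qed.

Lemma L9'_gval3 e : L9' e = map (gval3 e) L9'_lines.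
Proof. by rewrite /gval3 /gval /= !mul0r !addr0 !add0r mul1r mulN1r. Qed.

Theorem mainTheorem6 (e : algC) (he : e ^+ 2 + 1 = 0) :
  weak_Ziegler_pair L9 (L9' e).
Proof.
rewrite (L9_gval3 e) (L9'_gval3 e); split.
- exact: (reduced_arr_of_cert he L9_lines_meet).
- exact: (reduced_arr_of_cert he L9'_lines_meet).
- exact: (same_weak_comb_of_cert he L9_points_distinct L9_lines_meet
            L9'_points_distinct L9'_lines_meet (erefl 9%nat) L9_L9'_mult_perm).
- exists 4%nat, 5%nat; split=> //; apply: is_mdr_succ.
  + exact: (jac_syzygy_of_cert he L9_syzygy4).
  + exact: (no_jac_syzygy_of_cert he L9_no_syzygy3).
  + exact: (jac_syzygy_of_cert he L9'_syzygy5).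
  + exact: (no_jac_syzygy_of_cert he L9'_no_syzygy4).
Qed.
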